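(* In the setting below, assume $K_1:\mathbb{C}^V\to\mathbb{C}^{R\times S}$ is injective and let $\mathcal K_1:\mathbb{C}^{R\times S}\to\mathbb{C}^V$ be a linear left inverse of $K_1$ (e.g. the Moore–Penrose pseudoinverse), with $\mathcal K_j$, $j\ge2$, defined by the recursion below. Let $N\ge1$ and $0<a<1$. Then there is a constant $C_{N,a}$ (depending on $N,a$ and on $p,\alpha_0,G_0,\mathcal K_1$, but not on $\eta$) such that for every $\eta\in\mathbb{C}^V$ with $\mu_p\|\eta\|_p<a$, with scattering data $\phi=\sum_{j\ge1}K_j(\eta,\dots,\eta)$, $$\Big\|\eta-\sum_{j=1}^N\mathcal K_j(\phi,\dots,\phi)\Big\|_p\le C_{N,a}\,\|\eta\|_p^{N+1}.$$
   Context: Setting: Let $V$ and $\delta V$ be finite disjoint sets (interior and boundary vertices of a graph), let $R,S\subseteq\delta V$ be nonempty (receivers and sources), let $\alpha_0>0$, and let $G_0$ (the background Green's function) be a complex matrix with rows and columns indexed by $V\cup\delta V$. For $U,W\subseteq V\cup\delta V$, $G_0^{U;W}$ is the submatrix with rows indexed by $U$ and columns by $W$. For $a\in\mathbb{C}^V$, $D_a$ is the diagonal $V\times V$ matrix with diagonal $a$. For $j\ge1$ define the multilinear map $K_j:(\mathbb{C}^V)^j\to\mathbb{C}^{R\times S}$ by $$K_j(\eta_1,\dots,\eta_j)(r,s)=(-1)^{j+1}\alpha_0^{\,j}\,G_0^{r;V}D_{\eta_1}G_0^{V;V}D_{\eta_2}\cdots G_0^{V;V}D_{\eta_j}G_0^{V;s},\qquad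 r\in R,\ s\in S.$$ Fix $p,q\in[1,\infty]$ with $1/p+1/q=1$; $\|\cdot\|_p$ is the $\ell^p$ norm on $\mathbb{C}^V$ and on $\mathbb{C}^{R\times S}$. Define $\mu_p=\alpha_0\max_{v\in V}\|G_0^{v;V}\|_{\ell^q(V)}$ (when $\mu_p\|\eta\|_p<1$ the series $\sum_jK_j(\eta,\dots,\eta)$ converges). Inverse Born operators: given $\mathcal K_1$, define multilinear maps $\mathcal K_j:(\mathbb{C}^{R\times S})^j\to\mathbb{C}^V$ for $j\ge2$ by $$\mathcal K_j(\phi_1,\dots,\phi_j)=-\sum_{m=1}^{j-1}\ \sum_{\substack{i_1+\dots+i_m=j\\ i_l\ge1}}\mathcal K_m\Big(K_{i_1}(\mathcal K_1\phi_1,\dots,\mathcal K_1\phi_{i_1}),\,K_{i_2}(\mathcal K_1\phi_{i_1+1},\dots,\mathcal K_1\phi_{i_1+i_2}),\dots,K_{i_m}(\mathcal K_1\phi_{j-i_m+1},\dots,\mathcal K_1\phi_j)\Big).$$ *)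

From Stdlib Require Import Reals List.
Import ListNotations.
Open Scope R_scope.

Record Cplx := mkC { re : R; im : R }.
Definition C0 : Cplx := mkC 0 0.
Definition Cadd (x y : Cplx) : Cplx := mkC (re x + re y) (im x + im y).
Definition Copp (x : Cplx) : Cplx := mkC (- re x) (- im x).
Definition Csub (x y : Cplx) : Cplx := Cadd x (Copp y).
Definition Cmul (x y : Cplx) : Cplx :=
  mkC (re x * re y - im x * im y) (re x * im y + im x * re y).
Definition Cscale (a : R) (x : Cplx) : Cplx := mkC (a * re x) (a * im x).
Definition Cmod (x : Cplx) : R := sqrt (re x ^ 2 + im x ^ 2).

Definition Csum {T : Type} (l : list T) (f : T -> Cplx) : Cplx :=
  fold_right (fun x acc => Cadd (f x) acc) C0 l.
Definition Rsum {T : Type} (l : list T) (f : T -> R) : R :=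
  fold_right (fun x acc => f x + acc) 0 l.
Definition Rmaxl {T : Type} (l : list T) (f : T -> R) : R :=
  fold_right (fun x acc => Rmax (f x) acc) 0 l.

Definition Cseries_to (u : nat -> Cplx) (l : Cplx) : Prop :=
  infinite_sum (fun n => re (u n)) (re l) /\ infinite_sum (fun n => im (u n)) (im l).

Inductive pexp := PFin (p : R) | PInf.
Definition valid_pexp (p : pexp) : Prop :=
  match p with PFin r => 1 <= r | PInf => True end.
Definition conj_exp (p : pexp) : pexp :=
  match p with
  | PInf => PFin 1
  | PFin r => if Req_EM_T r 1 then PInf else PFin (r / (r - 1))
  end.
Definition rpow (x y : R) : R := if Rle_dec x 0 then 0 else Rpower x y.
Definition lpnorm {T : Type} (p : pexp) (l : list T) (f : T -> Cplx) : R :=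
  match p with
  | PFin r => rpow (Rsum l (fun i => rpow (Cmod (f i)) r)) (/ r)
  | PInf => Rmaxl l (fun i => Cmod (f i))
  end.

Section Born.
Context {T : Type} (V : list T) (alpha0 : R) (G0 : T -> T -> Cplx).

(* chain x [eta1;...;etaj] s =
   (G0^{x;V} D_eta1 G0^{V;V} D_eta2 ... G0^{V;V} D_etaj G0^{V;s}) *)
Fixpoint chain (x : T) (etas : list (T -> Cplx)) (s : T) : Cplx :=
  match etas with
  | [] => G0 x s
  | eta :: rest => Csum V (fun v => Cmul (G0 x v) (Cmul (eta v) (chain v rest s)))
  end.

Definition Kfwd (etas : list (T -> Cplx)) (r s : T) : Cplx :=
  let j := length etas in
  Cscale ((-1) ^ (S j) * alpha0 ^ j) (chain r etas s).

(* all compositions (ordered, positive parts) of n *)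
Definition inc_head (c : list nat) : list (list nat) :=
  match c with [] => [] | x :: l => [S x :: l] end.
Fixpoint comps (n : nat) : list (list nat) :=
  match n with
  | O => [[]]
  | S n' => map (cons 1%nat) (comps n') ++ flat_map inc_head (comps n')
  end.

Fixpoint blocks {A : Type} (c : list nat) (l : list A) : list (list A) :=
  match c with
  | [] => []
  | i :: c' => firstn i l :: blocks c' (skipn i l)
  end.

Variable Kinv1 : (T -> T -> Cplx) -> (T -> Cplx).

(* inverse Born operators with fuel; Kinv (phis) = calK_j(phi_1..phi_j) *)
Fixpoint Kinv_aux (fuel : nat) (phis : list (T -> T -> Cplx)) : T -> Cplx :=
  match fuel with
  | O => fun _ => C0
  | S n =>
    match phis with
    | [phi] => Kinv1 phi
    | _ =>
      let j := length phis in
      let psis := map Kinv1 phis in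
      fun v => Copp (Csum (filter (fun c => Nat.ltb (length c) j) (comps j))
                (fun c => Kinv_aux n (map Kfwd (blocks c psis)) v))
    end
  end.

Definition Kinv (phis : list (T -> T -> Cplx)) : T -> Cplx :=
  Kinv_aux (length phis) phis.

End Born.

(* Write ψ = 𝒦₁φ.  The operator 𝒦_j(φ,…,φ) depends on φ only through ψ and is
   multilinear in it: 𝒦_j(φ,…,φ) = J_j(ψ,…,ψ) for a multilinear J_j.  Splitting
   the Born series after N terms gives ψ = A + τ, with A = Σ_{i ≤ N} h_i,
   h_i = 𝒦₁K_i(η,…,η) = O(‖η‖^i), and τ = 𝒦₁(tail) = O(‖η‖^{N+1}) since the
   tail is geometric with ratio μ‖η‖ < a < 1.  Expanding J_j(A+τ,…,A+τ) gives
   the terms J_j(h_{i₁},…,h_{i_j}) over (i₁,…,i_j) ∈ [1,N]^j plus terms containing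
   τ.  Grouped by d = i₁+…+i_j, the recursion defining 𝒦_j says precisely that
   the terms indexed by the compositions of d sum to 0 for d ≥ 2, and to h₁ = η
   for d = 1.  So η − Σ_{j ≤ N} 𝒦_j(φ,…,φ) only retains terms with d > N and
   terms containing τ, all O(‖η‖^{N+1}).  The estimates are made in the sup
   norm over V, with Hölder's inequality controlling each application of G₀,
   and transferred to ℓ^p at the end. *)

From Stdlib Require Import Reals List Permutation Lia Lra FunctionalExtensionality ClassicalDescription.
From Coquelicot Require Complex.
Import ListNotations.
Open Scope R_scope.

(** * Complex moduli and finite sums *)

Lemma Cplx_ext (x y : Cplx) : re x = re y -> im x = im y -> x = y.
Proof. destruct x, y; simpl; intros; subst; reflexivity. Qed.

Ltac cring := apply Cplx_ext; simpl; ring.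

Definition toC (x : Cplx) : Complex.C := (re x, im x).
Lemma Cmod_toC x : Cmod x = Complex.Cmod (toC x).
Proof. reflexivity. Qed.

Lemma Cmod_ge0 x : 0 <= Cmod x.
Proof. rewrite Cmod_toC; apply Complex.Cmod_ge_0. Qed.

Lemma Cmod_add x y : Cmod (Cadd x y) <= Cmod x + Cmod y.
Proof.
  rewrite !Cmod_toC. replace (toC (Cadd x y)) with (Complex.Cplus (toC x) (toC y)).
  apply Complex.Cmod_triangle. reflexivity.
Qed.

Lemma Cmod_mul x y : Cmod (Cmul x y) = Cmod x * Cmod y.
Proof.
  rewrite !Cmod_toC. replace (toC (Cmul x y)) with (Complex.Cmult (toC x) (toC y)).
  apply Complex.Cmod_mult. reflexivity.
Qed.

Lemma Cmod_opp x : Cmod (Copp x) = Cmod x.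
Proof.
  rewrite !Cmod_toC. replace (toC (Copp x)) with (Complex.Copp (toC x)).
  apply Complex.Cmod_opp. reflexivity.
Qed.

Lemma Cmod_C0 : Cmod C0 = 0.
Proof. unfold Cmod; simpl. replace (0*(0*1)+0*(0*1)) with 0 by ring. apply sqrt_0. Qed.

Lemma Cmod_scale a x : Cmod (Cscale a x) = Rabs a * Cmod x.
Proof.
  replace (Cscale a x) with (Cmul (mkC a 0) x) by cring.
  rewrite Cmod_mul. f_equal. unfold Cmod; cbn [re im].
  replace (a^2+0^2) with (Rsqr a) by (unfold Rsqr; ring). apply sqrt_Rsqr_abs.
Qed.

Lemma Cmod_re_im x : Cmod x <= Rabs (re x) + Rabs (im x).
Proof.
  unfold Cmod. rewrite <- (sqrt_Rsqr (Rabs (re x) + Rabs (im x))).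
  2: { pose proof (Rabs_pos (re x)); pose proof (Rabs_pos (im x)); lra. }
  apply sqrt_le_1_alt. unfold Rsqr.
  pose proof (Rabs_pos (re x)); pose proof (Rabs_pos (im x)).
  replace (re x ^ 2) with (Rabs (re x) * Rabs (re x)).
  replace (im x ^ 2) with (Rabs (im x) * Rabs (im x)).
  nra.
  rewrite <- Rabs_mult; simpl; rewrite Rmult_1_r; apply Rabs_right; nra.
  rewrite <- Rabs_mult; simpl; rewrite Rmult_1_r; apply Rabs_right; nra.
Qed.

Lemma Rabs_re_le x : Rabs (re x) <= Cmod x.
Proof.
  unfold Cmod. rewrite <- sqrt_Rsqr_abs. apply sqrt_le_1_alt. unfold Rsqr.
  pose proof (pow2_ge_0 (im x)). simpl. lra.
Qed.
Lemma Rabs_im_le x : Rabs (im x) <= Cmod x.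
Proof.
  unfold Cmod. rewrite <- sqrt_Rsqr_abs. apply sqrt_le_1_alt. unfold Rsqr.
  pose proof (pow2_ge_0 (re x)). simpl. lra.
Qed.

Section Sums.
Context {X : Type}.

Lemma Csum_ext (l : list X) f g : (forall x, In x l -> f x = g x) -> Csum l f = Csum l g.
Proof.
  induction l; simpl; intros H; auto.
  rewrite H by auto. rewrite IHl; auto.
Qed.

Lemma Csum_app (l1 l2 : list X) f : Csum (l1 ++ l2) f = Cadd (Csum l1 f) (Csum l2 f).
Proof. induction l1; simpl. cring. rewrite IHl1. cring. Qed.

Lemma Csum_add (l : list X) f g : Csum l (fun x => Cadd (f x) (g x)) = Cadd (Csum l f) (Csum l g).
Proof. induction l; simpl. cring. rewrite IHl. cring. Qed.

Lemma Csum_opp (l : list X) f : Csum l (fun x => Copp (f x)) = Copp (Csum l f).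
Proof. induction l; simpl. cring. rewrite IHl. cring. Qed.

Lemma Csum_mul_l (l : list X) c f : Csum l (fun x => Cmul c (f x)) = Cmul c (Csum l f).
Proof. induction l; simpl. cring. rewrite IHl. cring. Qed.

Lemma Csum_zero (l : list X) f : (forall x, In x l -> f x = C0) -> Csum l f = C0.
Proof. induction l; simpl; intros H; auto. rewrite H, IHl; auto. cring. Qed.

Lemma Csum_delta (l : list X) y F : NoDup l -> In y l -> (forall x, In x l -> x <> y -> F x = C0) ->
  Csum l F = F y.
Proof.
  induction 1 as [|a l Ha Hl IH]; simpl; intros Hy HF. destruct Hy.
  destruct (classic (a = y)) as [E|E].
  - subst. rewrite Csum_zero. cring. intros x Hx. apply HF; auto. intro; subst; auto.
  - destruct Hy as [Hy|Hy]. congruence. rewrite HF by auto. rewrite IH; auto. cring.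
Qed.

Lemma Csum_perm (l1 l2 : list X) f : Permutation l1 l2 -> Csum l1 f = Csum l2 f.
Proof.
  induction 1; simpl; auto.
  - rewrite IHPermutation; auto.
  - cring.
  - congruence.
Qed.

Lemma Csum_map {Y} (l : list Y) (m : Y -> X) f : Csum (map m l) f = Csum l (fun y => f (m y)).
Proof. induction l; simpl; congruence. Qed.

Lemma Csum_flat_map {Y} (l : list Y) (m : Y -> list X) f :
  Csum (flat_map m l) f = Csum l (fun y => Csum (m y) f).
Proof. induction l; simpl; auto. rewrite Csum_app. congruence. Qed.

Lemma Csum_filter (l : list X) (p : X -> bool) f :
  Csum l f = Cadd (Csum (filter p l) f) (Csum (filter (fun x => negb (p x)) l) f).
Proof.
  induction l; simpl. cring. destruct (p a); simpl; rewrite IHl; cring.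
Qed.

Lemma re_Csum (l : list X) f : re (Csum l f) = Rsum l (fun x => re (f x)).
Proof. induction l; simpl; auto. rewrite IHl; auto. Qed.
Lemma im_Csum (l : list X) f : im (Csum l f) = Rsum l (fun x => im (f x)).
Proof. induction l; simpl; auto. rewrite IHl; auto. Qed.

Lemma Rsum_le (l : list X) f g : (forall x, In x l -> f x <= g x) -> Rsum l f <= Rsum l g.
Proof. induction l; simpl; intros H. lra. pose proof (H a (or_introl eq_refl)). pose proof (IHl (fun x h => H x (or_intror h))). lra. Qed.

Lemma Rsum_nonneg (l : list X) f : (forall x, In x l -> 0 <= f x) -> 0 <= Rsum l f.
Proof. induction l; simpl; intros H. lra. pose proof (H a (or_introl eq_refl)). pose proof (IHl (fun x h => H x (or_intror h))). lra. Qed.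

Lemma Rsum_const (l : list X) c : Rsum l (fun _ => c) = INR (length l) * c.
Proof. induction l; simpl length; rewrite ?S_INR; simpl; [ring|]. rewrite IHl; ring. Qed.

Lemma Rsum_mul_l (l : list X) c f : Rsum l (fun x => c * f x) = c * Rsum l f.
Proof. induction l; simpl. ring. rewrite IHl; ring. Qed.

Lemma Rsum_mul_r (l : list X) c f : Rsum l (fun x => f x * c) = Rsum l f * c.
Proof. induction l; simpl. ring. rewrite IHl; ring. Qed.

Lemma Rsum_app (l1 l2 : list X) f : Rsum (l1 ++ l2) f = Rsum l1 f + Rsum l2 f.
Proof. induction l1; simpl. ring. rewrite IHl1; ring. Qed.

Lemma Cmod_Csum (l : list X) f : Cmod (Csum l f) <= Rsum l (fun x => Cmod (f x)).
Proof.
  induction l; simpl. rewrite Cmod_C0; lra.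
  eapply Rle_trans. apply Cmod_add. lra.
Qed.

Lemma Cmod_Csum_bound (l : list X) f c K :
  (forall x, In x l -> Cmod (f x) <= c x * K) -> Cmod (Csum l f) <= Rsum l c * K.
Proof.
  intros H. eapply Rle_trans. apply Cmod_Csum. rewrite <- Rsum_mul_r. apply Rsum_le; auto.
Qed.

Lemma Rsum_ext (l : list X) f g : (forall x, In x l -> f x = g x) -> Rsum l f = Rsum l g.
Proof. induction l; simpl; intros H; auto. rewrite H, IHl; auto. Qed.

Lemma Rsum_plus (l : list X) f g : Rsum l (fun x => f x + g x) = Rsum l f + Rsum l g.
Proof. induction l; simpl. ring. rewrite IHl; ring. Qed.

Lemma Rmaxl_ge (l : list X) f x : In x l -> f x <= Rmaxl l f.
Proof.
  induction l; simpl; intros H. destruct H.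
  destruct H; subst. apply Rmax_l. eapply Rle_trans. apply IHl; auto. apply Rmax_r.
Qed.

Lemma Rmaxl_nonneg (l : list X) f : 0 <= Rmaxl l f.
Proof. induction l; simpl. lra. eapply Rle_trans. apply IHl. apply Rmax_r. Qed.

Lemma Rmaxl_le (l : list X) f K : 0 <= K -> (forall x, In x l -> f x <= K) -> Rmaxl l f <= K.
Proof.
  induction l; simpl; intros HK H. auto.
  apply Rmax_lub. auto. apply IHl; auto.
Qed.

Lemma Csum_cons (x : X) l f : Csum (x :: l) f = Cadd (f x) (Csum l f).
Proof. reflexivity. Qed.

Lemma Rsum_term (l : list X) f x : (forall y, In y l -> 0 <= f y) -> In x l -> f x <= Rsum l f.
Proof.
  induction l as [|a l IH]; simpl; intros Hf Hx; [destruct Hx|].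
  pose proof (Rsum_nonneg l f (fun y h => Hf y (or_intror h))).
  pose proof (Hf a (or_introl eq_refl)).
  destruct Hx as [<-|Hx]; [lra|].
  pose proof (IH (fun y h => Hf y (or_intror h)) Hx). lra.
Qed.

Lemma Rsum_filter_le (l : list X) (q : X -> bool) f : (forall x, In x l -> 0 <= f x) ->
  Rsum (filter q l) f <= Rsum l f.
Proof.
  induction l; simpl; intros Hf. lra.
  pose proof (Hf a (or_introl eq_refl)). pose proof (IHl (fun x h => Hf x (or_intror h))).
  destruct (q a); simpl; lra.
Qed.

Lemma Rabs_Rsum (l : list X) f : Rabs (Rsum l f) <= Rsum l (fun x => Rabs (f x)).
Proof.
  induction l; simpl. rewrite Rabs_R0; lra. eapply Rle_trans. apply Rabs_triang. lra.
Qed.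

End Sums.

(** * ℓ^p norms and Hölder's inequality *)

Lemma Rdiv_le_0_compat a b : 0 <= a -> 0 < b -> 0 <= a / b.
Proof. intros; unfold Rdiv; apply Rmult_le_pos; [auto|left; apply Rinv_0_lt_compat; auto]. Qed.

Lemma Rpower_pos x y : 0 < Rpower x y.
Proof. unfold Rpower; apply exp_pos. Qed.

Lemma rpow_nonneg x y : 0 <= rpow x y.
Proof. unfold rpow; destruct (Rle_dec x 0). lra. left; apply Rpower_pos. Qed.

Lemma rpow_pos x y : 0 < x -> rpow x y = Rpower x y.
Proof. intros; unfold rpow; destruct (Rle_dec x 0); [lra|auto]. Qed.

Lemma rpow_le0 x y : x <= 0 -> rpow x y = 0.
Proof. intros; unfold rpow; destruct (Rle_dec x 0); [auto|lra]. Qed.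

Lemma rpow_mono x z y : 0 <= y -> x <= z -> rpow x y <= rpow z y.
Proof.
  intros Hy Hxz. destruct (Rle_dec x 0). rewrite rpow_le0 by auto. apply rpow_nonneg.
  rewrite !rpow_pos by lra. apply Rle_Rpower_l; lra.
Qed.

Lemma rpow_1 x : 0 <= x -> rpow x 1 = x.
Proof.
  intros. destruct (Rle_dec x 0). rewrite rpow_le0; lra.
  rewrite rpow_pos by lra. apply Rpower_1; lra.
Qed.

Lemma rpow_eq0 x y : 0 <= x -> rpow x y <= 0 -> x = 0.
Proof.
  intros. destruct (Rle_dec x 0). lra. rewrite rpow_pos in H0 by lra.
  pose proof (Rpower_pos x y); lra.
Qed.

Lemma exp_convex t a b : 0 <= t <= 1 -> exp (t * a + (1 - t) * b) <= t * exp a + (1 - t) * exp b.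
Proof.
  intros Ht. set (m := t * a + (1 - t) * b).
  assert (Ea : exp a = exp m * exp (a - m)) by (rewrite <- exp_plus; f_equal; ring).
  assert (Eb : exp b = exp m * exp (b - m)) by (rewrite <- exp_plus; f_equal; ring).
  pose proof (exp_ineq1_le (a - m)). pose proof (exp_ineq1_le (b - m)).
  pose proof (exp_pos m).
  assert (t * exp a >= t * (exp m * (1 + (a - m)))) by (rewrite Ea; apply Rle_ge; apply Rmult_le_compat_l; [lra|]; apply Rmult_le_compat_l; lra).
  assert ((1-t) * exp b >= (1-t) * (exp m * (1 + (b - m)))) by (rewrite Eb; apply Rle_ge; apply Rmult_le_compat_l; [lra|]; apply Rmult_le_compat_l; lra).
  assert (t * (exp m * (1 + (a - m))) + (1-t) * (exp m * (1 + (b - m))) = exp m) by (unfold m; ring).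
  lra.
Qed.

Lemma young x y r : 1 < r -> 0 <= x -> 0 <= y ->
  x * y <= rpow x (r / (r - 1)) / (r / (r - 1)) + rpow y r / r.
Proof.
  intros Hr Hx Hy. set (s := r / (r - 1)).
  assert (Hs : 0 < s) by (unfold s; apply Rdiv_lt_0_compat; lra).
  assert (Hsr : / s + / r = 1) by (unfold s; field; lra).
  pose proof (rpow_nonneg x s); pose proof (rpow_nonneg y r).
  assert (0 <= rpow x s / s) by (apply Rdiv_le_0_compat; lra).
  assert (0 <= rpow y r / r) by (apply Rdiv_le_0_compat; lra).
  destruct (Rle_dec x 0). { assert (x = 0) by lra; subst x. rewrite Rmult_0_l. lra. }
  destruct (Rle_dec y 0). { assert (y = 0) by lra; subst y. rewrite Rmult_0_r. lra. }
  rewrite !rpow_pos by lra.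
  replace (x * y) with (exp (/ s * (s * ln x) + (1 - / s) * (r * ln y))).
  2: { replace (/ s * (s * ln x) + (1 - / s) * (r * ln y)) with (ln x + ln y) by (replace (1 - / s) with (/ r) by lra; field; lra).
       rewrite exp_plus, !exp_ln; lra. }
  eapply Rle_trans. apply exp_convex.
  { split. left; apply Rinv_0_lt_compat; lra. assert (0 < / r) by (apply Rinv_0_lt_compat; lra). lra. }
  unfold Rpower. replace (1 - / s) with (/ r) by lra. unfold Rdiv. lra.
Qed.

Lemma rpow_div x A y : 0 <= x -> 0 < A -> rpow (x / A) y = rpow x y / Rpower A y.
Proof.
  intros Hx HA. destruct (Rle_dec x 0).
  - replace x with 0 by lra. rewrite !rpow_le0 by (unfold Rdiv; lra). unfold Rdiv; ring.
  - rewrite !rpow_pos by (try apply Rdiv_lt_0_compat; lra).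
    unfold Rpower, Rdiv. rewrite ln_mult by (try apply Rinv_0_lt_compat; lra).
    rewrite ln_Rinv by lra. rewrite <- exp_Ropp. rewrite <- exp_plus. f_equal. ring.
Qed.

Lemma holder {X} (l : list X) (a b : X -> R) r : 1 < r -> (forall x, 0 <= a x) -> (forall x, 0 <= b x) ->
  Rsum l (fun x => a x * b x) <=
  rpow (Rsum l (fun x => rpow (a x) (r / (r - 1)))) (/ (r / (r - 1))) *
  rpow (Rsum l (fun x => rpow (b x) r)) (/ r).
Proof.
  intros Hr Ha Hb. set (s := r / (r - 1)).
  assert (Hs : 0 < s) by (unfold s; apply Rdiv_lt_0_compat; lra).
  assert (Hsr : / s + / r = 1) by (unfold s; field; lra).
  set (SA := Rsum l (fun x => rpow (a x) s)). set (SB := Rsum l (fun x => rpow (b x) r)).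
  assert (HR : 0 <= rpow SA (/ s) * rpow SB (/ r)) by (apply Rmult_le_pos; apply rpow_nonneg).
  destruct (Rle_dec SA 0).
  { assert (Rsum l (fun x => a x * b x) <= Rsum l (fun _ => 0)).
    { apply Rsum_le. intros x Hx. assert (a x = 0). { apply (rpow_eq0 _ s); auto.
        eapply Rle_trans. apply (Rsum_term l (fun x => rpow (a x) s)); auto. intros; apply rpow_nonneg. fold SA; lra. }
      rewrite H; lra. }
    rewrite Rsum_const in H. lra. }
  destruct (Rle_dec SB 0).
  { assert (Rsum l (fun x => a x * b x) <= Rsum l (fun _ => 0)).
    { apply Rsum_le. intros x Hx. assert (b x = 0). { apply (rpow_eq0 _ r); auto.
        eapply Rle_trans. apply (Rsum_term l (fun x => rpow (b x) r)); auto. intros; apply rpow_nonneg. fold SB; lra. }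
      rewrite H; lra. }
    rewrite Rsum_const in H. lra. }
  rewrite !rpow_pos by lra.
  set (A := Rpower SA (/ s)). set (B := Rpower SB (/ r)).
  assert (HA : 0 < A) by apply Rpower_pos. assert (HB : 0 < B) by apply Rpower_pos.
  assert (EA : Rpower A s = SA) by (unfold A; rewrite Rpower_mult, Rinv_l by lra; apply Rpower_1; lra).
  assert (EB : Rpower B r = SB) by (unfold B; rewrite Rpower_mult, Rinv_l by lra; apply Rpower_1; lra).
  assert (Hsum : Rsum l (fun x => (a x / A) * (b x / B)) <= 1).
  { eapply Rle_trans. apply Rsum_le. intros x _. apply (young _ _ r);
      [lra | apply Rdiv_le_0_compat; auto | apply Rdiv_le_0_compat; auto].
    fold s. right.
    rewrite (Rsum_ext l _ (fun x => rpow (a x) s * (/ SA * / s) + rpow (b x) r * (/ SB * / r))).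
    2: { intros x _. rewrite !rpow_div by auto. rewrite EA, EB. field; lra. }
    rewrite Rsum_plus, !Rsum_mul_r. fold SA SB. rewrite <- Hsr. field; lra. }
  replace (Rsum l (fun x => a x * b x)) with (A * B * Rsum l (fun x => (a x / A) * (b x / B))).
  2: { rewrite <- Rsum_mul_l. apply Rsum_ext. intros; field; lra. }
  pose proof (Rmult_lt_0_compat _ _ HA HB). nra.
Qed.
Lemma lpnorm_nonneg {X} p (l : list X) f : 0 <= lpnorm p l f.
Proof. destruct p; simpl. apply rpow_nonneg. apply Rmaxl_nonneg. Qed.

Lemma lpnorm_1 {X} (l : list X) f : lpnorm (PFin 1) l f = Rsum l (fun x => Cmod (f x)).
Proof.
  simpl. rewrite Rinv_1. rewrite (Rsum_ext l _ (fun x => Cmod (f x))).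
  apply rpow_1. apply Rsum_nonneg; intros; apply Cmod_ge0.
  intros; apply rpow_1; apply Cmod_ge0.
Qed.

Lemma lpnorm_holder {X} p (l : list X) G e : valid_pexp p ->
  Rsum l (fun x => Cmod (G x) * Cmod (e x)) <= lpnorm (conj_exp p) l G * lpnorm p l e.
Proof.
  intros Hp. destruct p as [r|]; simpl in Hp.
  - unfold conj_exp. destruct (Req_EM_T r 1).
    + subst r. rewrite lpnorm_1. simpl lpnorm. rewrite <- Rsum_mul_l. apply Rsum_le.
      intros x Hx. apply Rmult_le_compat_r. apply Cmod_ge0. apply (Rmaxl_ge l (fun x => Cmod (G x))); auto.
    + apply (holder l (fun x => Cmod (G x)) (fun x => Cmod (e x)) r); try (intros; apply Cmod_ge0). lra.
  - simpl conj_exp. rewrite lpnorm_1. simpl lpnorm. rewrite <- Rsum_mul_r. apply Rsum_le.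
    intros x Hx. apply Rmult_le_compat_l. apply Cmod_ge0. apply (Rmaxl_ge l (fun x => Cmod (e x))); auto.
Qed.

Lemma lpnorm_le_sup {X} p (l : list X) f m : valid_pexp p -> 0 <= m ->
  (forall x, In x l -> Cmod (f x) <= m) -> lpnorm p l f <= (INR (length l) + 1) * m.
Proof.
  intros Hp Hm H. pose proof (pos_INR (length l)).
  destruct p as [r|]; simpl in Hp; simpl lpnorm.
  2: { apply Rle_trans with m. apply Rmaxl_le; auto. nra. }
  assert (Hs : Rsum l (fun x => rpow (Cmod (f x)) r) <= INR (length l) * rpow m r).
  { rewrite <- Rsum_const. apply Rsum_le. intros. apply rpow_mono. lra. auto. }
  destruct (Rle_dec m 0).
  { assert (m = 0) by lra. subst m. rewrite rpow_le0 in Hs by lra. rewrite Rmult_0_r in Hs.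
    rewrite rpow_le0 by lra. lra. }
  eapply Rle_trans. apply rpow_mono. left; apply Rinv_0_lt_compat; lra. apply Hs.
  destruct (Rle_dec (INR (length l)) 0).
  { rewrite rpow_le0. nra. rewrite rpow_pos by lra. pose proof (Rpower_pos m r). nra. }
  rewrite (rpow_pos m) by lra. rewrite rpow_pos. 2: { apply Rmult_lt_0_compat. lra. apply Rpower_pos. }
  rewrite <- Rpower_mult_distr by (try apply Rpower_pos; lra).
  rewrite Rpower_mult, Rinv_r, Rpower_1 by lra.
  apply Rmult_le_compat_r. lra.
  destruct (Rle_dec 1 (INR (length l))).
  - eapply Rle_trans. apply Rle_Rpower with (m := 1). auto.
    rewrite <- Rinv_1. apply Rinv_le_contravar; lra. rewrite Rpower_1; lra.
  - assert (Rpower (INR (length l)) (/ r) <= Rpower 1 (/ r)).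
    { apply Rle_Rpower_l. left; apply Rinv_0_lt_compat; lra. lra. }
    unfold Rpower at 2 in H1. rewrite ln_1, Rmult_0_r, exp_0 in H1. lra.
Qed.

(** * Geometric tails and power bookkeeping *)

Lemma geom_sum_le x : 0 <= x < 1 -> forall k n0, Rsum (seq n0 k) (fun n => x ^ n) <= x ^ n0 / (1 - x).
Proof.
  intros Hx k. induction k; intros n0; simpl.
  - apply Rdiv_le_0_compat. apply pow_le; lra. lra.
  - pose proof (IHk (S n0)) as IHs. simpl in IHs.
    apply Rle_trans with (x ^ n0 + x * x ^ n0 / (1 - x)). lra.
    right. field. lra.
Qed.

Lemma sum_f_R0_seq w M : sum_f_R0 w M = Rsum (seq 0 (S M)) w.
Proof.
  induction M. simpl; ring. rewrite seq_S, Rsum_app. simpl sum_f_R0. rewrite IHM. simpl. ring.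
Qed.

Lemma infinite_sum_dist_le w L S0 Bd N : infinite_sum w L -> (forall M, (N <= M)%nat -> Rabs (sum_f_R0 w M - S0) <= Bd) ->
  Rabs (L - S0) <= Bd.
Proof.
  intros Hw HM. apply Rnot_lt_le. intro Hc.
  destruct (Hw (Rabs (L - S0) - Bd)) as [N0 HN0]. lra.
  pose proof (HN0 (Nat.max N0 N) (Nat.le_max_l _ _)) as Hclose. unfold R_dist in Hclose.
  pose proof (HM (Nat.max N0 N) (Nat.le_max_r _ _)).
  pose proof (Rabs_triang (L - sum_f_R0 w (Nat.max N0 N)) (sum_f_R0 w (Nat.max N0 N) - S0)) as Htri.
  replace (L - sum_f_R0 w (Nat.max N0 N) + (sum_f_R0 w (Nat.max N0 N) - S0)) with (L - S0) in Htri by ring.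
  rewrite Rabs_minus_sym in Hclose. lra.
Qed.

Lemma series_tail_geom (c m h a : R) N w L : 0 <= c -> 0 <= m -> 0 <= h -> a < 1 -> m * h < a ->
  infinite_sum w L -> (forall n, Rabs (w n) <= c * m ^ n * h ^ S n) ->
  Rabs (L - Rsum (seq 0 N) w) <= c * m ^ N * h ^ S N / (1 - a).
Proof.
  intros Hc Hm Hh Ha Hx Hw Hb. apply (infinite_sum_dist_le w L _ _ N Hw). intros M HM.
  rewrite sum_f_R0_seq. replace (S M) with (N + (S M - N))%nat by lia.
  rewrite seq_app, Rsum_app. simpl (0 + N)%nat.
  replace (Rsum (seq 0 N) w + Rsum (seq N (S M - N)) w - Rsum (seq 0 N) w) with (Rsum (seq N (S M - N)) w) by ring.
  eapply Rle_trans. apply Rabs_Rsum.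
  set (x := m * h). assert (Hx0 : 0 <= x) by (apply Rmult_le_pos; auto).
  eapply Rle_trans. apply (Rsum_le _ _ (fun n => (c * h) * x ^ n)).
  { intros n _. eapply Rle_trans. apply Hb. right. unfold x. rewrite Rpow_mult_distr. simpl. ring. }
  rewrite Rsum_mul_l. eapply Rle_trans. apply Rmult_le_compat_l. apply Rmult_le_pos; auto.
  apply geom_sum_le. unfold x in *; lra.
  replace (c * m ^ N * h ^ S N / (1 - a)) with (c * h * (x ^ N / (1 - a))).
  2: { unfold x. rewrite Rpow_mult_distr. simpl. field. lra. }
  apply Rmult_le_compat_l. apply Rmult_le_pos; auto.
  unfold Rdiv. apply Rmult_le_compat_l. apply pow_le; auto.
  apply Rinv_le_contravar; unfold x in *; lra.
Qed.

Lemma pow_le_one y k : 0 <= y <= 1 -> y ^ k <= 1.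
Proof. intros Hy. induction k; simpl. lra. pose proof (pow_le y k (proj1 Hy)). nra. Qed.

Lemma pow_trade_up m n0 len sum N : 0 <= m -> 0 <= n0 -> m * n0 <= 1 -> (len <= S N <= sum)%nat ->
  m ^ (sum - len) * n0 ^ sum <= m ^ (S N - len) * n0 ^ S N.
Proof.
  intros Hm Hn Hmn Hl.
  replace (sum - len)%nat with ((S N - len) + (sum - S N))%nat by lia.
  replace sum with (S N + (sum - S N))%nat at 2 by lia.
  rewrite !pow_add.
  replace (m ^ (S N - len) * m ^ (sum - S N) * (n0 ^ S N * n0 ^ (sum - S N))) with
    (m ^ (S N - len) * n0 ^ S N * (m * n0) ^ (sum - S N)) by (rewrite Rpow_mult_distr; ring).
  rewrite <- (Rmult_1_r (m ^ (S N - len) * n0 ^ S N)) at 2.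
  apply Rmult_le_compat_l. apply Rmult_le_pos; apply pow_le; auto.
  apply pow_le_one. split; auto. apply Rmult_le_pos; auto.
Qed.

Lemma pow_trade_down m n0 j N0 : 0 <= m -> 0 <= n0 -> m * n0 <= 1 -> (j <= N0)%nat -> m ^ N0 * n0 ^ j <= m ^ (N0 - j).
Proof.
  intros. replace N0 with ((N0 - j) + j)%nat at 1 by lia. rewrite pow_add.
  rewrite Rmult_assoc, <- Rpow_mult_distr. rewrite <- (Rmult_1_r (m ^ (N0 - j))) at 2.
  apply Rmult_le_compat_l. apply pow_le; auto. apply pow_le_one. split; auto. apply Rmult_le_pos; auto.
Qed.

Lemma Rmult3_le_compat a b c a' b' c' : 0 <= a -> 0 <= b -> 0 <= c -> a <= a' -> b <= b' -> c <= c' -> a * (b * c) <= a' * (b' * c').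
Proof.
  intros. apply Rmult_le_compat; auto. apply Rmult_le_pos; auto.
  apply Rmult_le_compat; auto.
Qed.

Lemma Rmult3_nonneg a b c : 0 <= a -> 0 <= b -> 0 <= c -> 0 <= a * b * c.
Proof. intros; repeat apply Rmult_le_pos; auto. Qed.

(** * Compositions, tuples and blocks *)

Lemma NoDup_map_inj {A B} (f : A -> B) l : (forall x y, f x = f y -> x = y) -> NoDup l -> NoDup (map f l).
Proof.
  intros Hf; induction 1; simpl; constructor; auto.
  intros Hin. apply in_map_iff in Hin. destruct Hin as [y [Hy Hy']]. apply Hf in Hy. subst; auto.
Qed.

Lemma NoDup_flat_map {A B} (f : A -> list B) l : NoDup l -> (forall x, In x l -> NoDup (f x)) ->
  (forall x y z, In x l -> In y l -> x <> y -> In z (f x) -> ~ In z (f y)) -> NoDup (flat_map f l).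
Proof.
  induction 1 as [|a l Ha Hl IH]; simpl; intros H1 H2. constructor.
  apply NoDup_app. auto. apply IH. intros x Hx; apply H1; auto.
  intros x y z Hx Hy; apply H2; auto.
  intros z Hz Hz'. apply in_flat_map in Hz'. destruct Hz' as [y [Hy Hzy]].
  apply (H2 a y z); auto. intro; subst; auto.
Qed.

Lemma comps_sound n c : In c (comps n) -> Forall (fun i => (1 <= i)%nat) c /\ list_sum c = n.
Proof.
  revert c; induction n; simpl; intros c Hc.
  - destruct Hc as [<-|[]]. split; auto.
  - apply in_app_or in Hc. destruct Hc as [Hc|Hc].
    + apply in_map_iff in Hc. destruct Hc as [c' [<- Hc']]. apply IHn in Hc'. destruct Hc'.
      split. constructor; auto. simpl. lia.
    + apply in_flat_map in Hc. destruct Hc as [c' [Hc' Hin]]. apply IHn in Hc'. destruct Hc' as [Hf Hs].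
      destruct c' as [|x l]; simpl in Hin. destruct Hin. destruct Hin as [<-|[]].
      inversion Hf; subst. split. constructor; auto. simpl in *. lia.
Qed.

Lemma comps_complete c : Forall (fun i => (1 <= i)%nat) c -> In c (comps (list_sum c)).
Proof.
  remember (list_sum c) as n. revert c Heqn. induction n; intros c Hn Hf.
  - destruct c as [|x l]. simpl; auto. inversion Hf; subst. simpl in Hn. lia.
  - destruct c as [|x l]. simpl in Hn. lia. inversion Hf; subst. simpl in Hn. simpl.
    apply in_or_app. destruct x as [|[|y]]; [lia| |].
    + left. apply in_map. apply IHn. simpl in Hn; lia. auto.
    + right. apply in_flat_map. exists (S y :: l). split.
      * apply IHn. simpl in *; lia. constructor; auto; lia.
      * simpl; auto.
Qed.

Lemma inc_head_NoDup l : NoDup l -> NoDup (flat_map inc_head l).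
Proof.
  induction 1 as [|c l Hc Hl IH]; simpl. constructor.
  destruct c as [|x l']; simpl. auto.
  constructor; auto. intro Hin. apply in_flat_map in Hin. destruct Hin as [c' [Hc' Hin]].
  destruct c' as [|y l'']; simpl in Hin. destruct Hin. destruct Hin as [E|[]].
  inversion E; subst. auto.
Qed.

Lemma comps_NoDup n : NoDup (comps n).
Proof.
  induction n; simpl. constructor; auto. constructor.
  apply NoDup_app.
  - apply NoDup_map_inj; auto. intros x y H; inversion H; auto.
  - apply inc_head_NoDup; auto.
  - intros c Hc Hc'. apply in_map_iff in Hc. destruct Hc as [c0 [<- Hc0]].
    apply in_flat_map in Hc'. destruct Hc' as [c' [Hc' Hin]].
    apply comps_sound in Hc'. destruct Hc' as [Hf _].
    destruct c' as [|y l'']; simpl in Hin. destruct Hin. destruct Hin as [E|[]].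
    inversion E; subst. inversion Hf; subst. lia.
Qed.
Fixpoint tuples {X} (l : list X) (j : nat) : list (list X) :=
  match j with
  | O => [[]]
  | S j' => flat_map (fun x => map (cons x) (tuples l j')) l
  end.

Lemma tuples_spec {X} (l : list X) j xs :
  In xs (tuples l j) <-> length xs = j /\ Forall (fun x => In x l) xs.
Proof.
  revert xs; induction j; simpl; intros xs; split.
  - intros [<-|[]]. split; auto.
  - intros [H1 H2]. destruct xs; simpl in *; auto; lia.
  - intros H. apply in_flat_map in H. destruct H as [x [Hx Hin]]. apply in_map_iff in Hin.
    destruct Hin as [ys [<- Hys]]. apply IHj in Hys. destruct Hys. split. simpl; lia. constructor; auto.
  - intros [H1 H2]. destruct xs as [|x ys]; simpl in H1. lia. inversion H2; subst.
    apply in_flat_map. exists x. split; auto. apply in_map. apply IHj. split; auto.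
Qed.

Lemma tuples_NoDup {X} (l : list X) j : NoDup l -> NoDup (tuples l j).
Proof.
  intros Hl. induction j; simpl. constructor; auto. constructor.
  apply NoDup_flat_map; auto.
  - intros x _. apply NoDup_map_inj; auto. intros a b H; inversion H; auto.
  - intros x y z _ _ Hxy Hz Hz'. apply in_map_iff in Hz, Hz'.
    destruct Hz as [a [<- _]]. destruct Hz' as [b [E _]]. inversion E; auto.
Qed.

Lemma tuples_bool_head k :
  tuples [true; false] k = repeat true k :: tl (tuples [true; false] k) /\
  forall xs, In xs (tl (tuples [true; false] k)) -> In false xs.
Proof.
  induction k as [|k [E Hf]]; [split; [reflexivity | intros _ []]|].
  cbn [tuples flat_map]. rewrite E. cbn [map app tl repeat]. split; [reflexivity|].
  intros xs Hxs. rewrite app_nil_r in Hxs. apply in_app_or in Hxs as [Hxs|Hxs].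
  - apply in_map_iff in Hxs as [ys [<- Hys]]. right; auto.
  - destruct Hxs as [<-|Hxs]; [left; reflexivity|].
    apply in_map_iff in Hxs as [ys [<- _]]. left; reflexivity.
Qed.

Lemma firstn_repeat_le {A} (x : A) i n : (i <= n)%nat -> firstn i (repeat x n) = repeat x i.
Proof.
  revert n; induction i; intros n H; simpl; auto. destruct n. lia. simpl. f_equal. apply IHi; lia.
Qed.

Lemma skipn_repeat_sub {A} (x : A) i n : skipn i (repeat x n) = repeat x (n - i).
Proof.
  revert n; induction i; intros n; simpl. rewrite Nat.sub_0_r; auto. destruct n; simpl; auto.
Qed.

Lemma blocks_repeat {A} (x : A) c n : (list_sum c <= n)%nat ->
  blocks c (repeat x n) = map (fun i => repeat x i) c.
Proof.
  revert n; induction c as [|i c IH]; intros n H; simpl; auto. simpl in H.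
  rewrite firstn_repeat_le by lia. rewrite skipn_repeat_sub. f_equal. apply IH. lia.
Qed.

Lemma blocks_length {A} c (l : list A) : length (blocks c l) = length c.
Proof. revert l; induction c; simpl; auto. Qed.

Lemma Forall2_firstn {A B} (R : A -> B -> Prop) l l' n : Forall2 R l l' -> Forall2 R (firstn n l) (firstn n l').
Proof. intros H; revert n; induction H; intros n; destruct n; simpl; auto. Qed.
Lemma Forall2_skipn {A B} (R : A -> B -> Prop) l l' n : Forall2 R l l' -> Forall2 R (skipn n l) (skipn n l').
Proof. intros H; revert n; induction H; intros n; destruct n; simpl; auto. Qed.

Lemma Forall2_repeat {A B} (R : A -> B -> Prop) x y k : R x y -> Forall2 R (repeat x k) (repeat y k).
Proof. intros; induction k; simpl; constructor; auto. Qed.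

Lemma blocks_Forall2 {A B} (R : A -> B -> Prop) c l l' : Forall2 R l l' ->
  Forall2 (Forall2 R) (blocks c l) (blocks c l').
Proof.
  revert l l'; induction c; simpl; intros l l' H; constructor.
  apply Forall2_firstn; auto. apply IHc. apply Forall2_skipn; auto.
Qed.

Lemma blocks_split {A} c (pre rest : list A) : (length pre < list_sum c)%nat ->
  exists bpre bl br brest, forall z, blocks c (pre ++ z :: rest) = bpre ++ (bl ++ z :: br) :: brest.
Proof.
  revert pre; induction c as [|i c IH]; intros pre H; simpl in H. lia.
  destruct (Nat.lt_ge_cases (length pre) i) as [Hlt|Hge].
  - exists [], pre, (firstn (i - length pre - 1) rest), (blocks c (skipn (i - length pre - 1) rest)).
    intros z. simpl. rewrite firstn_app, skipn_app.
    rewrite firstn_all2 by lia. rewrite skipn_all2 by lia.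
    replace (i - length pre)%nat with (S (i - length pre - 1)) by lia. simpl. rewrite Nat.sub_0_r. reflexivity.
  - destruct (IH (skipn i pre)) as [bpre [bl [br [brest E]]]].
    { rewrite length_skipn. lia. }
    exists (firstn i pre :: bpre), bl, br, brest. intros z. simpl.
    rewrite firstn_app, skipn_app. replace (i - length pre)%nat with 0%nat by lia. simpl.
    rewrite app_nil_r. rewrite E. reflexivity.
Qed.

Lemma elem_le_list_sum c x : In x c -> (x <= list_sum c)%nat.
Proof. induction c; simpl; intros H. destruct H. destruct H; subst. lia. apply IHc in H; lia. Qed.

Lemma length_le_list_sum c : Forall (fun i => (1 <= i)%nat) c -> (length c <= list_sum c)%nat.
Proof. induction 1; simpl; lia. Qed.

Lemma filter_all_false {A} (p : A -> bool) l : (forall x, In x l -> p x = false) -> filter p l = [].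
Proof. induction l; simpl; intros H0; auto. rewrite H0 by auto. apply IHl; auto. Qed.

Lemma filter_comps_full d : filter (fun c => negb (Nat.ltb (length c) d)) (comps d) = [repeat 1%nat d].
Proof.
  induction d. reflexivity.
  simpl comps. rewrite filter_app, filter_map_swap.
  rewrite (filter_all_false _ (flat_map inc_head (comps d))).
  - rewrite app_nil_r. simpl length.
    replace (filter (fun x => negb (S (length x) <? S d)) (comps d)) with
      (filter (fun c => negb (length c <? d)) (comps d)).
    rewrite IHd. reflexivity.
    apply filter_ext. intros c. reflexivity.
  - intros x Hx. apply in_flat_map in Hx. destruct Hx as [c [Hc Hin]].
    apply comps_sound in Hc. destruct Hc as [Hf Hs]. apply length_le_list_sum in Hf.
    destruct c as [|y l]; simpl in Hin. destruct Hin. destruct Hin as [<-|[]].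
    simpl in *. assert (Hlt : (S (length l) <? S d) = true) by (apply Nat.ltb_lt; lia). rewrite Hlt; reflexivity.
Qed.

Definition index_tuples N := flat_map (fun j => tuples (seq 1 N) (S j)) (seq 0 N).

Lemma index_tuples_small_perm N : Permutation (filter (fun is => Nat.leb (list_sum is) N) (index_tuples N)) (flat_map comps (seq 1 N)).
Proof.
  apply NoDup_Permutation.
  - apply NoDup_filter. apply NoDup_flat_map. apply seq_NoDup.
    intros; apply tuples_NoDup, seq_NoDup.
    intros x y z _ _ Hxy Hz Hz'. apply tuples_spec in Hz, Hz'. destruct Hz, Hz'. lia.
  - apply NoDup_flat_map. apply seq_NoDup. intros; apply comps_NoDup.
    intros x y z _ _ Hxy Hz Hz'. apply comps_sound in Hz, Hz'. destruct Hz, Hz'. lia.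
  - intros x. rewrite filter_In. unfold index_tuples. rewrite !in_flat_map. split.
    + intros [[j [Hj Hx]] Hs]. apply Nat.leb_le in Hs. apply tuples_spec in Hx. destruct Hx as [Hl Hf].
      exists (list_sum x). assert (Hp : Forall (fun i => (1 <= i)%nat) x).
      { eapply Forall_impl; [|apply Hf]. intros a Ha. apply in_seq in Ha. lia. }
      split. apply in_seq. pose proof (length_le_list_sum x Hp). lia.
      apply comps_complete; auto.
    + intros [d [Hd Hx]]. apply in_seq in Hd. apply comps_sound in Hx. destruct Hx as [Hp Hs].
      pose proof (length_le_list_sum x Hp).
      split. 2: apply Nat.leb_le; lia.
      exists (pred (length x)). split. apply in_seq. destruct x; simpl in *; lia.
      apply tuples_spec. split. destruct x; simpl in *; lia.
      apply Forall_forall. intros a Ha. apply in_seq. rewrite Forall_forall in Hp. pose proof (Hp a Ha).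
      pose proof (elem_le_list_sum x a Ha). lia.
Qed.

(** * Multilinearity of the inverse Born operators *)

Section Main.
Variable T : Type.
Variables V Rc Sc : list T.
Variable alpha0 : R.
Variable G0 : T -> T -> Cplx.
Variable Kinv1 : (T -> T -> Cplx) -> (T -> Cplx).
Hypothesis Hwd : forall phi psi : T -> T -> Cplx,
      (forall r s, In r Rc -> In s Sc -> phi r s = psi r s) ->
      forall v, In v V -> Kinv1 phi v = Kinv1 psi v.
Hypothesis Hadd : forall (phi psi : T -> T -> Cplx) v, In v V ->
      Kinv1 (fun r s => Cadd (phi r s) (psi r s)) v = Cadd (Kinv1 phi v) (Kinv1 psi v).
Hypothesis Hscal : forall (c : Cplx) (phi : T -> T -> Cplx) v, In v V ->
      Kinv1 (fun r s => Cmul c (phi r s)) v = Cmul c (Kinv1 phi v).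
Hypothesis Hleft : forall (eta : T -> Cplx) v, In v V ->
      Kinv1 (Kfwd V alpha0 G0 [eta]) v = eta v.

Definition eqV (f g : T -> Cplx) := forall v, In v V -> f v = g v.
Definition fadd (f g : T -> Cplx) := fun v => Cadd (f v) (g v).
Definition fscale c (f : T -> Cplx) := fun v => Cmul c (f v).
Definition fzero : T -> Cplx := fun _ => C0.
Definition Kf (l : list (T -> Cplx)) := Kfwd V alpha0 G0 l.
Definition KinvK (l : list (T -> Cplx)) := Kinv1 (Kf l).

Lemma eqV_refl f : eqV f f.
Proof. intros v _; auto. Qed.

Lemma Forall2_eqV_refl l : Forall2 eqV l l.
Proof. induction l; constructor; auto. apply eqV_refl. Qed.

Lemma Forall2_eqV_mid pre a b rest : eqV a b -> Forall2 eqV (pre ++ a :: rest) (pre ++ b :: rest).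
Proof. intros; apply Forall2_app. apply Forall2_eqV_refl. constructor; auto. apply Forall2_eqV_refl. Qed.

Lemma chain_add pre x y rest s : forall xx,
  chain V G0 xx (pre ++ fadd x y :: rest) s = Cadd (chain V G0 xx (pre ++ x :: rest) s) (chain V G0 xx (pre ++ y :: rest) s).
Proof.
  induction pre as [|e pre IH]; intros xx; simpl.
  - rewrite <- Csum_add. apply Csum_ext; intros; unfold fadd; cring.
  - rewrite <- Csum_add. apply Csum_ext; intros. rewrite IH. cring.
Qed.

Lemma chain_scale pre c x rest s : forall xx,
  chain V G0 xx (pre ++ fscale c x :: rest) s = Cmul c (chain V G0 xx (pre ++ x :: rest) s).
Proof.
  induction pre as [|e pre IH]; intros xx; simpl.
  - rewrite <- Csum_mul_l. apply Csum_ext; intros; unfold fscale; cring.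
  - rewrite <- Csum_mul_l. apply Csum_ext; intros. rewrite IH. cring.
Qed.

Lemma chain_congr l l' s : Forall2 eqV l l' -> forall xx, chain V G0 xx l s = chain V G0 xx l' s.
Proof.
  induction 1 as [|a b l l' Hab Hl IH]; intros xx; simpl; auto.
  apply Csum_ext; intros v Hv. rewrite Hab, IH; auto.
Qed.

Lemma Kf_add pre x y rest r s :
  Kf (pre ++ fadd x y :: rest) r s = Cadd (Kf (pre ++ x :: rest) r s) (Kf (pre ++ y :: rest) r s).
Proof.
  unfold Kf, Kfwd. rewrite !length_app. simpl length. rewrite chain_add. cring.
Qed.

Lemma Kf_scale pre c x rest r s :
  Kf (pre ++ fscale c x :: rest) r s = Cmul c (Kf (pre ++ x :: rest) r s).
Proof.
  unfold Kf, Kfwd. rewrite !length_app. simpl length. rewrite chain_scale. cring.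
Qed.

Lemma KinvK_add pre x y rest : eqV (KinvK (pre ++ fadd x y :: rest)) (fadd (KinvK (pre ++ x :: rest)) (KinvK (pre ++ y :: rest))).
Proof.
  intros v Hv. unfold KinvK. 
  replace (Kf (pre ++ fadd x y :: rest)) with (fun r s => Cadd (Kf (pre ++ x :: rest) r s) (Kf (pre ++ y :: rest) r s)).
  apply Hadd; auto.
  apply functional_extensionality; intro r; apply functional_extensionality; intro s. rewrite Kf_add; auto.
Qed.

Lemma KinvK_scale pre c x rest : eqV (KinvK (pre ++ fscale c x :: rest)) (fscale c (KinvK (pre ++ x :: rest))).
Proof.
  intros v Hv. unfold KinvK.
  replace (Kf (pre ++ fscale c x :: rest)) with (fun r s => Cmul c (Kf (pre ++ x :: rest) r s)).
  apply Hscal; auto.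
  apply functional_extensionality; intro r; apply functional_extensionality; intro s. rewrite Kf_scale; auto.
Qed.

Lemma KinvK_congr l l' : Forall2 eqV l l' -> KinvK l = KinvK l'.
Proof.
  intros Hl. unfold KinvK, Kf, Kfwd. rewrite (Forall2_length Hl). f_equal.
  apply functional_extensionality; intro r; apply functional_extensionality; intro s.
  rewrite (chain_congr l l'); auto.
Qed.

Lemma KinvK_single eta : eqV (KinvK [eta]) eta.
Proof. intros v Hv. apply Hleft; auto. Qed.

(* [Kinv] uses its arguments only through their images under [Kinv1]
   ([Kinv_aux_Jinv]); [Jinv] is the same recursion stated on those images. *)
Fixpoint Jinv (fuel : nat) (ps : list (T -> Cplx)) : T -> Cplx :=
  match fuel with
  | O => fzero
  | S n =>
    match ps with
    | [p] => p
    | _ => fun v => Copp (Csum (filter (fun c => Nat.ltb (length c) (length ps)) (comps (length ps)))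
                         (fun c => Jinv n (map KinvK (blocks c ps)) v))
    end
  end.

Lemma Jinv_unfold n ps : length ps <> 1%nat ->
  Jinv (S n) ps = fun v => Copp (Csum (filter (fun c => Nat.ltb (length c) (length ps)) (comps (length ps)))
                         (fun c => Jinv n (map KinvK (blocks c ps)) v)).
Proof. intros H1. destruct ps as [|a [|b ps]]; simpl in *; auto. lia. Qed.

Lemma Kinv_aux_Jinv fuel phis v : In v V ->
  Kinv_aux V alpha0 G0 Kinv1 fuel phis v = Jinv fuel (map Kinv1 phis) v.
Proof.
  revert phis v. induction fuel; intros phis v Hv. reflexivity.
  destruct (Nat.eq_dec (length phis) 1) as [E|E].
  - destruct phis as [|a [|b phis]]; simpl in E; try lia. reflexivity.
  - rewrite Jinv_unfold by (rewrite length_map; auto). rewrite length_map.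
    destruct phis as [|a [|b phis]]; simpl in E; try lia; simpl Kinv_aux; cbv beta; f_equal; apply Csum_ext; intros c Hc;
    rewrite IHfuel, map_map; auto.
Qed.

Lemma Jinv_congr fuel : forall l l', Forall2 eqV l l' -> eqV (Jinv fuel l) (Jinv fuel l').
Proof.
  induction fuel; intros l l' Hl v Hv. reflexivity.
  destruct (Nat.eq_dec (length l) 1) as [E|E].
  - destruct l as [|a [|b l]]; simpl in E; try lia. inversion Hl as [|x y l1 l2 Hxy Hrest]; subst. inversion Hrest; subst. simpl. apply Hxy; auto.
  - rewrite !Jinv_unfold by (rewrite <- ?(Forall2_length Hl); auto). rewrite <- (Forall2_length Hl). f_equal.
    apply Csum_ext; intros c Hc.
    pose proof (blocks_Forall2 _ c _ _ Hl) as Hb.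
    assert (E2 : map KinvK (blocks c l) = map KinvK (blocks c l')).
    { induction Hb as [|b1 b2 bs bs' Hb12 _ IHb]; simpl; auto. rewrite (KinvK_congr _ _ Hb12), IHb; auto. }
    rewrite E2; auto.
Qed.

Lemma Jinv_add fuel : forall pre x y rest,
  eqV (Jinv fuel (pre ++ fadd x y :: rest)) (fadd (Jinv fuel (pre ++ x :: rest)) (Jinv fuel (pre ++ y :: rest))).
Proof.
  induction fuel; intros pre x y rest v Hv. simpl; unfold fzero, fadd; cring.
  destruct (Nat.eq_dec (length (pre ++ x :: rest)) 1) as [E|E].
  - rewrite length_app in E; simpl in E. destruct pre; destruct rest; simpl in E; try lia. simpl. reflexivity.
  - assert (E' : forall z, length (pre ++ z :: rest) <> 1%nat) by (intros z; rewrite length_app in *; simpl in *; lia).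
    transitivity (Cadd (Jinv (S fuel) (pre ++ x :: rest) v) (Jinv (S fuel) (pre ++ y :: rest) v)); [|reflexivity].
    rewrite !Jinv_unfold by apply E'. rewrite !length_app. simpl length.
    rewrite <- !Csum_opp. rewrite <- Csum_add.
    apply Csum_ext. intros c Hc. apply filter_In in Hc. destruct Hc as [Hc _].
    apply comps_sound in Hc. destruct Hc as [_ Hs].
    destruct (blocks_split c pre rest) as [bpre [bl [br [brest Eb]]]]. lia.
    rewrite !Eb, !map_app. simpl map.
    rewrite (Jinv_congr _ _ _ (Forall2_eqV_mid _ _ _ _ (KinvK_add bl x y br))) by auto.
    rewrite IHfuel by auto. unfold fadd. cring.
Qed.

Lemma Jinv_scale fuel : forall pre c x rest,
  eqV (Jinv fuel (pre ++ fscale c x :: rest)) (fscale c (Jinv fuel (pre ++ x :: rest))).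
Proof.
  induction fuel; intros pre c0 x rest v Hv. simpl; unfold fzero, fscale; cring.
  destruct (Nat.eq_dec (length (pre ++ x :: rest)) 1) as [E|E].
  - rewrite length_app in E; simpl in E. destruct pre; destruct rest; simpl in E; try lia. simpl. reflexivity.
  - assert (E' : forall z, length (pre ++ z :: rest) <> 1%nat) by (intros z; rewrite length_app in *; simpl in *; lia).
    transitivity (Cmul c0 (Jinv (S fuel) (pre ++ x :: rest) v)); [|reflexivity].
    rewrite !Jinv_unfold by apply E'. rewrite !length_app. simpl length.
    rewrite <- !Csum_opp. rewrite <- Csum_mul_l.
    apply Csum_ext. intros c Hc. apply filter_In in Hc. destruct Hc as [Hc _].
    apply comps_sound in Hc. destruct Hc as [_ Hs].
    destruct (blocks_split c pre rest) as [bpre [bl [br [brest Eb]]]]. lia.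
    rewrite !Eb, !map_app. simpl map.
    rewrite (Jinv_congr _ _ _ (Forall2_eqV_mid _ _ _ _ (KinvK_scale bl c0 x br))) by auto.
    rewrite IHfuel by auto. unfold fscale. cring.
Qed.

Lemma Jinv_zero fuel pre rest : eqV (Jinv fuel (pre ++ fzero :: rest)) fzero.
Proof.
  intros v Hv. replace fzero with (fscale C0 fzero) at 1.
  rewrite Jinv_scale by auto. unfold fscale, fzero. cring.
  apply functional_extensionality; intro; unfold fscale, fzero; cring.
Qed.

Definition fsum {X} (l : list X) (f : X -> T -> Cplx) : T -> Cplx := fun v => Csum l (fun x => f x v).

Lemma Jinv_sum_at {X} fuel pre rest (l : list X) f :
  eqV (Jinv fuel (pre ++ fsum l f :: rest)) (fun v => Csum l (fun x => Jinv fuel (pre ++ f x :: rest) v)).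
Proof.
  induction l; intros v Hv.
  - apply Jinv_zero; auto.
  - change (fsum (a :: l) f) with (fadd (f a) (fsum l f)).
    rewrite Jinv_add by auto. unfold fadd. rewrite IHl by auto. reflexivity.
Qed.

Lemma Jinv_expand {X} fuel (l : list X) f j : forall pre,
  eqV (Jinv fuel (pre ++ repeat (fsum l f) j))
      (fun v => Csum (tuples l j) (fun xs => Jinv fuel (pre ++ map f xs) v)).
Proof.
  induction j; intros pre v Hv; simpl.
  - cring.
  - rewrite Jinv_sum_at by auto. rewrite Csum_flat_map. apply Csum_ext. intros x _.
    rewrite Csum_map. simpl.
    replace (pre ++ f x :: repeat (fsum l f) j) with ((pre ++ [f x]) ++ repeat (fsum l f) j)
      by (rewrite <- app_assoc; reflexivity).
    rewrite IHj by auto. apply Csum_ext. intros xs _. rewrite <- app_assoc. reflexivity.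
Qed.

Lemma Jinv_fuel fuel1 : forall fuel2 ps, (length ps <= fuel1)%nat -> (length ps <= fuel2)%nat ->
  eqV (Jinv fuel1 ps) (Jinv fuel2 ps).
Proof.
  induction fuel1; intros fuel2 ps H1 H2 v Hv.
  - destruct ps; simpl in H1; try lia. destruct fuel2; simpl; unfold fzero; cring.
  - destruct fuel2.
    + destruct ps; simpl in H2; try lia. simpl; unfold fzero; cring.
    + destruct (Nat.eq_dec (length ps) 1) as [E|E].
      * destruct ps as [|a [|b ps]]; simpl in E; try lia. reflexivity.
      * rewrite !Jinv_unfold by auto. f_equal. apply Csum_ext. intros c Hc.
        apply filter_In in Hc. destruct Hc as [_ Hc]. apply Nat.ltb_lt in Hc.
        apply IHfuel1; auto; rewrite length_map, blocks_length; lia.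
Qed.

(** * Cancellation along compositions *)

Section Cancel.
Variable eta : T -> Cplx.
Definition born_term (i : nat) := KinvK (repeat eta i).
Definition comp_term (c : list nat) := Jinv (length c) (map born_term c).

(* [1 + ... + 1] is the only composition of [d] with [d] parts, and the
   recursion defining [Jinv] makes its term minus the sum of all the others. *)
Lemma comp_terms_cancel d : (2 <= d)%nat -> eqV (fun v => Csum (comps d) (fun c => comp_term c v)) fzero.
Proof.
  intros Hd v Hv. rewrite (Csum_filter _ (fun c => Nat.ltb (length c) d)).
  rewrite filter_comps_full. simpl Csum.
  assert (E : comp_term (repeat 1%nat d) v = Copp (Csum (filter (fun c => length c <? d) (comps d)) (fun c => comp_term c v))).
  { unfold comp_term. rewrite repeat_length, map_repeat.
    rewrite (Jinv_congr d _ _ (Forall2_repeat eqV _ _ d (KinvK_single eta))) by auto.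
    destruct d as [|n]. lia. rewrite Jinv_unfold by (rewrite repeat_length; lia). rewrite repeat_length.
    f_equal. apply Csum_ext. intros c Hc. apply filter_In in Hc. destruct Hc as [Hc Hlt].
    apply Nat.ltb_lt in Hlt. apply comps_sound in Hc. destruct Hc as [_ Hs].
    rewrite blocks_repeat by lia. rewrite map_map. apply Jinv_fuel; auto; rewrite length_map; lia. }
  rewrite E. unfold fzero. cring.
Qed.

Lemma comp_terms_total N : (1 <= N)%nat -> eqV (fun v => Csum (flat_map comps (seq 1 N)) (fun c => comp_term c v)) eta.
Proof.
  intros HN v Hv. rewrite Csum_flat_map. destruct N. lia. simpl seq. simpl Csum.
  rewrite Csum_zero. unfold comp_term. simpl. unfold born_term. simpl. rewrite KinvK_single by auto. cring.
  intros d Hd. apply in_seq in Hd. apply comp_terms_cancel; auto. lia.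
Qed.
End Cancel.

(** * Sup-norm bounds *)

Hypothesis HRnd : NoDup Rc.
Hypothesis HSnd : NoDup Sc.
Hypothesis Hal : 0 < alpha0.

Definition supV (f : T -> Cplx) := Rmaxl V (fun v => Cmod (f v)).
Definition supRS (phi : T -> T -> Cplx) := Rmaxl Rc (fun r => Rmaxl Sc (fun s => Cmod (phi r s))).
Definition supV_prod (l : list (T -> Cplx)) := fold_right (fun f acc => supV f * acc) 1 l.
Definition G0max := Rmaxl (Rc ++ V) (fun x => Rmaxl (V ++ Sc) (fun y => Cmod (G0 x y))).
Definition nV := INR (length V).

Lemma supV_ge f v : In v V -> Cmod (f v) <= supV f.
Proof. intros; apply (Rmaxl_ge V (fun v => Cmod (f v))); auto. Qed.
Lemma supV_nonneg f : 0 <= supV f.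
Proof. apply Rmaxl_nonneg. Qed.
Lemma supV_le f K : 0 <= K -> (forall v, In v V -> Cmod (f v) <= K) -> supV f <= K.
Proof. intros; apply Rmaxl_le; auto. Qed.
Lemma supV_prod_nonneg l : 0 <= supV_prod l.
Proof. induction l; simpl. lra. apply Rmult_le_pos; auto. apply supV_nonneg. Qed.
Lemma supV_prod_app l1 l2 : supV_prod (l1 ++ l2) = supV_prod l1 * supV_prod l2.
Proof. induction l1; simpl. ring. rewrite IHl1; ring. Qed.
Lemma G0max_nonneg : 0 <= G0max.
Proof. apply Rmaxl_nonneg. Qed.
Lemma G0max_ge x y : In x (Rc ++ V) -> In y (V ++ Sc) -> Cmod (G0 x y) <= G0max.
Proof.
  intros Hx Hy. eapply Rle_trans. apply (Rmaxl_ge (V ++ Sc) (fun y => Cmod (G0 x y))); auto.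
  apply (Rmaxl_ge (Rc ++ V) (fun x => Rmaxl (V ++ Sc) (fun y => Cmod (G0 x y)))); auto.
Qed.
Lemma nV_nonneg : 0 <= nV.
Proof. apply pos_INR. Qed.
Lemma supRS_ge phi r s : In r Rc -> In s Sc -> Cmod (phi r s) <= supRS phi.
Proof.
  intros. eapply Rle_trans. apply (Rmaxl_ge Sc (fun s => Cmod (phi r s))); auto.
  apply (Rmaxl_ge Rc (fun r => Rmaxl Sc (fun s => Cmod (phi r s)))); auto.
Qed.
Lemma supRS_le phi K : 0 <= K -> (forall r s, In r Rc -> In s Sc -> Cmod (phi r s) <= K) -> supRS phi <= K.
Proof. intros. apply Rmaxl_le; auto. intros. apply Rmaxl_le; auto. Qed.

Lemma chain_bound l : forall x s, In x (Rc ++ V) -> In s Sc ->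
  Cmod (chain V G0 x l s) <= G0max * (nV * G0max) ^ (length l) * supV_prod l.
Proof.
  induction l as [|e l IH]; intros x s Hx Hs; simpl.
  - rewrite Rmult_1_r, Rmult_1_r. apply G0max_ge; auto. apply in_or_app; auto.
  - eapply Rle_trans. apply Cmod_Csum.
    eapply Rle_trans. apply (Rsum_le _ _ (fun _ => G0max * (supV e * (G0max * (nV * G0max) ^ length l * supV_prod l)))).
    + intros v Hv. rewrite !Cmod_mul. apply Rmult3_le_compat; try apply Cmod_ge0.
      apply G0max_ge; auto; apply in_or_app; auto. apply supV_ge; auto. apply IH; auto. apply in_or_app; auto.
    + rewrite Rsum_const. fold nV. right. ring.
Qed.

Lemma Rabs_born_coef j : Rabs ((-1) ^ S j * alpha0 ^ j) = alpha0 ^ j.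
Proof.
  rewrite Rabs_mult, pow_1_abs, <- RPow_abs, Rabs_right by lra. ring.
Qed.

Lemma Kf_bound l r s : In r Rc -> In s Sc ->
  Cmod (Kf l r s) <= G0max * (alpha0 * nV * G0max) ^ (length l) * supV_prod l.
Proof.
  intros Hr Hs. unfold Kf, Kfwd. rewrite Cmod_scale, Rabs_born_coef.
  eapply Rle_trans. apply Rmult_le_compat_l. apply pow_le; lra. apply chain_bound; auto. apply in_or_app; auto.
  right. rewrite !Rpow_mult_distr. ring.
Qed.

Definition delta (r s : T) : T -> T -> Cplx :=
  fun r' s' => if excluded_middle_informative (r = r' /\ s = s') then mkC 1 0 else C0.

Lemma Kinv1_lin_sum {X} (l : list X) F v : In v V ->
  Kinv1 (fun r s => Csum l (fun x => F x r s)) v = Csum l (fun x => Kinv1 (F x) v).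
Proof.
  intros Hv. induction l; simpl.
  - replace (fun _ _ : T => C0) with (fun r s : T => Cmul C0 C0).
    rewrite Hscal by auto. cring.
    apply functional_extensionality; intro; apply functional_extensionality; intro; cring.
  - rewrite (Hadd (F a) (fun r s => Csum l (fun x => F x r s))) by auto. rewrite IHl. reflexivity.
Qed.

Lemma delta_decomp phi r0 s0 : In r0 Rc -> In s0 Sc ->
  Csum Rc (fun r => Csum Sc (fun s => Cmul (phi r s) (delta r s r0 s0))) = phi r0 s0.
Proof.
  intros Hr Hs. rewrite (Csum_delta Rc r0); auto.
  - rewrite (Csum_delta Sc s0); auto.
    + unfold delta. destruct (excluded_middle_informative (r0 = r0 /\ s0 = s0)) as [_|N]. cring. tauto.
    + intros s _ Hne. unfold delta. destruct (excluded_middle_informative (r0 = r0 /\ s = s0)) as [[_ E]|_]. congruence. cring.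
  - intros r _ Hne. apply Csum_zero. intros s _. unfold delta.
    destruct (excluded_middle_informative (r = r0 /\ s = s0)) as [[E _]|_]. congruence. cring.
Qed.

(* A bound for the linear map [Kinv1] from the sup norm on R × S to the sup norm
   on V, read off its values on the standard basis [delta r s]. *)
Definition Kinv1_gain := Rmaxl V (fun v => Rsum Rc (fun r => Rsum Sc (fun s => Cmod (Kinv1 (delta r s) v)))).

Lemma Kinv1_gain_nonneg : 0 <= Kinv1_gain.
Proof. apply Rmaxl_nonneg. Qed.

Lemma Kinv1_bound phi v : In v V -> Cmod (Kinv1 phi v) <= Kinv1_gain * supRS phi.
Proof.
  intros Hv.
  rewrite (Hwd phi (fun r' s' => Csum Rc (fun r => Csum Sc (fun s => Cmul (phi r s) (delta r s r' s'))))); auto.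
  2: { intros; rewrite delta_decomp; auto. }
  rewrite (Kinv1_lin_sum Rc (fun r r' s' => Csum Sc (fun s => Cmul (phi r s) (delta r s r' s')))) by auto.
  rewrite (Csum_ext Rc _ (fun r => Csum Sc (fun s => Cmul (phi r s) (Kinv1 (delta r s) v)))).
  2: { intros r _. rewrite (Kinv1_lin_sum Sc (fun s r' s' => Cmul (phi r s) (delta r s r' s'))) by auto.
       apply Csum_ext. intros s _. apply Hscal; auto. }
  eapply Rle_trans. apply Cmod_Csum.
  apply Rle_trans with (Rsum Rc (fun r => Rsum Sc (fun s => Cmod (Kinv1 (delta r s) v))) * supRS phi).
  - rewrite <- Rsum_mul_r. apply Rsum_le. intros r Hr. eapply Rle_trans. apply Cmod_Csum.
    rewrite <- Rsum_mul_r. apply Rsum_le. intros s Hs. rewrite Cmod_mul. rewrite Rmult_comm.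
    apply Rmult_le_compat_l. apply Cmod_ge0. apply supRS_ge; auto.
  - apply Rmult_le_compat_r. apply Rmaxl_nonneg.
    apply (Rmaxl_ge V (fun v => Rsum Rc (fun r => Rsum Sc (fun s => Cmod (Kinv1 (delta r s) v))))); auto.
Qed.
Definition KinvK_gain := Kinv1_gain * G0max.
Definition chain_gain := alpha0 * nV * G0max.
Lemma KinvK_gain_nonneg : 0 <= KinvK_gain.
Proof. unfold KinvK_gain; apply Rmult_le_pos; [apply Kinv1_gain_nonneg|apply G0max_nonneg]. Qed.
Lemma chain_gain_nonneg : 0 <= chain_gain.
Proof. unfold chain_gain; apply Rmult_le_pos; [apply Rmult_le_pos; [lra|apply nV_nonneg]|apply G0max_nonneg]. Qed.

Lemma supRS_Kf l : supRS (Kf l) <= G0max * chain_gain ^ (length l) * supV_prod l.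
Proof.
  apply supRS_le. apply Rmult_le_pos. apply Rmult_le_pos. apply G0max_nonneg. apply pow_le, chain_gain_nonneg.
  apply supV_prod_nonneg. intros; apply Kf_bound; auto.
Qed.

Lemma supV_KinvK l : supV (KinvK l) <= KinvK_gain * chain_gain ^ (length l) * supV_prod l.
Proof.
  apply supV_le. apply Rmult_le_pos; [apply Rmult_le_pos; [apply KinvK_gain_nonneg| apply pow_le, chain_gain_nonneg] | apply supV_prod_nonneg].
  intros v Hv. eapply Rle_trans. apply Kinv1_bound; auto. unfold KinvK_gain.
  rewrite !Rmult_assoc. apply Rmult_le_compat_l. apply Kinv1_gain_nonneg. rewrite <- !Rmult_assoc. apply supRS_Kf.
Qed.

Lemma supV_prod_blocks c : forall l, list_sum c = length l ->
  supV_prod (map KinvK (blocks c l)) <= KinvK_gain ^ (length c) * chain_gain ^ (length l) * supV_prod l.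
Proof.
  induction c as [|i c IH]; intros l Hs; simpl in *.
  - destruct l; simpl in *; try lia. lra.
  - assert (El : supV_prod l = supV_prod (firstn i l) * supV_prod (skipn i l)) by (rewrite <- supV_prod_app, firstn_skipn; auto).
    assert (Ll : length l = (length (firstn i l) + length (skipn i l))%nat) by (rewrite <- length_app, firstn_skipn; auto).
    rewrite El. rewrite Ll at 1. rewrite pow_add.
    replace (KinvK_gain * KinvK_gain ^ length c * (chain_gain ^ length (firstn i l) * chain_gain ^ length (skipn i l)) *
             (supV_prod (firstn i l) * supV_prod (skipn i l))) with
      ((KinvK_gain * chain_gain ^ length (firstn i l) * supV_prod (firstn i l)) *
       (KinvK_gain ^ length c * chain_gain ^ length (skipn i l) * supV_prod (skipn i l))) by ring.
    apply Rmult_le_compat. apply supV_nonneg. apply supV_prod_nonneg.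
    apply supV_KinvK. apply IH. rewrite length_skipn. lia.
Qed.

Fixpoint Jinv_const (fuel j : nat) : R :=
  match fuel with
  | O => 0
  | S n => if Nat.eqb j 1 then 1 else
      Rsum (filter (fun c => Nat.ltb (length c) j) (comps j)) (fun c => Jinv_const n (length c) * (KinvK_gain ^ length c * chain_gain ^ j))
  end.

Lemma Jinv_const_nonneg fuel j : 0 <= Jinv_const fuel j.
Proof.
  revert j; induction fuel; intros j; simpl. lra. destruct (Nat.eqb j 1). lra.
  apply Rsum_nonneg. intros; apply Rmult_le_pos; auto. apply Rmult_le_pos; apply pow_le. apply KinvK_gain_nonneg. apply chain_gain_nonneg.
Qed.

Lemma Jinv_bound fuel : forall l v, In v V -> Cmod (Jinv fuel l v) <= Jinv_const fuel (length l) * supV_prod l.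
Proof.
  induction fuel; intros l v Hv. simpl. unfold fzero. rewrite Cmod_C0. lra.
  destruct (Nat.eq_dec (length l) 1) as [E|E].
  - destruct l as [|a [|b l]]; simpl in E; try lia. simpl. rewrite Rmult_1_r, Rmult_1_l. apply supV_ge; auto.
  - rewrite Jinv_unfold by auto. simpl Jinv_const. replace (Nat.eqb (length l) 1) with false by (symmetry; apply Nat.eqb_neq; auto).
    rewrite Cmod_opp. apply Cmod_Csum_bound. intros c Hc.
    apply filter_In in Hc. destruct Hc as [Hc _]. apply comps_sound in Hc. destruct Hc as [_ Hs].
    eapply Rle_trans. apply IHfuel; auto. rewrite length_map, blocks_length.
    rewrite Rmult_assoc. apply Rmult_le_compat_l. apply Jinv_const_nonneg.
    apply supV_prod_blocks; auto.
Qed.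

(** * Bounds in terms of the ℓ^p norm of η *)

Variable p : pexp.
Hypothesis Hp : valid_pexp p.
Definition Gq_max := Rmaxl V (fun v => lpnorm (conj_exp p) V (G0 v)).
Definition Gq_maxR := Rmaxl Rc (fun r => lpnorm (conj_exp p) V (G0 r)).
Definition mu := alpha0 * Gq_max.
Definition series_gain := alpha0 * Gq_maxR * G0max.
Definition term_gain := Kinv1_gain * series_gain.

Lemma Gq_max_nonneg : 0 <= Gq_max. Proof. apply Rmaxl_nonneg. Qed.
Lemma Gq_maxR_nonneg : 0 <= Gq_maxR. Proof. apply Rmaxl_nonneg. Qed.
Lemma mu_nonneg : 0 <= mu. Proof. unfold mu; apply Rmult_le_pos; [lra|apply Gq_max_nonneg]. Qed.
Lemma series_gain_nonneg : 0 <= series_gain.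
Proof. unfold series_gain; repeat apply Rmult_le_pos; try lra; [apply Gq_maxR_nonneg|apply G0max_nonneg]. Qed.
Lemma term_gain_nonneg : 0 <= term_gain.
Proof. unfold term_gain; apply Rmult_le_pos; [apply Kinv1_gain_nonneg|apply series_gain_nonneg]. Qed.

Lemma chain_step x e l s M : 0 <= M -> (forall w, In w V -> Cmod (chain V G0 w l s) <= M) ->
  Cmod (chain V G0 x (e :: l) s) <= lpnorm (conj_exp p) V (G0 x) * lpnorm p V e * M.
Proof.
  intros HM Hw. simpl. eapply Rle_trans. apply Cmod_Csum.
  eapply Rle_trans. apply (Rsum_le _ _ (fun w => Cmod (G0 x w) * Cmod (e w) * M)).
  - intros w Hw'. rewrite !Cmod_mul. rewrite Rmult_assoc. apply Rmult_le_compat_l. apply Cmod_ge0.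
    apply Rmult_le_compat_l. apply Cmod_ge0. auto.
  - rewrite Rsum_mul_r. apply Rmult_le_compat_r; auto. apply lpnorm_holder; auto.
Qed.

Section Eta.
Variable eta : T -> Cplx.
Definition eta_norm := lpnorm p V eta.
Lemma eta_norm_nonneg : 0 <= eta_norm. Proof. apply lpnorm_nonneg. Qed.

Lemma chain_repeat_bound k : forall v s, In v V -> In s Sc -> Cmod (chain V G0 v (repeat eta k) s) <= G0max * (Gq_max * eta_norm) ^ k.
Proof.
  induction k; intros v s Hv Hs.
  - simpl. rewrite Rmult_1_r. apply G0max_ge; apply in_or_app; auto.
  - simpl repeat. eapply Rle_trans. apply chain_step. 2: { intros w Hw. apply IHk; auto. }
    apply Rmult_le_pos. apply G0max_nonneg. apply pow_le. apply Rmult_le_pos. apply Gq_max_nonneg. apply eta_norm_nonneg.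
    simpl. fold eta_norm. rewrite <- !Rmult_assoc.
    apply Rmult_le_compat_r. apply pow_le. apply Rmult_le_pos. apply Gq_max_nonneg. apply eta_norm_nonneg.
    replace (G0max * Gq_max * eta_norm) with (Gq_max * eta_norm * G0max) by ring. apply Rmult_le_compat_r. apply G0max_nonneg.
    apply Rmult_le_compat_r. apply eta_norm_nonneg.
    apply (Rmaxl_ge V (fun v => lpnorm (conj_exp p) V (G0 v))); auto.
Qed.

Lemma Kf_repeat_bound k r s : In r Rc -> In s Sc -> Cmod (Kf (repeat eta (S k)) r s) <= series_gain * mu ^ k * eta_norm ^ (S k).
Proof.
  intros Hr Hs. unfold Kf, Kfwd. rewrite Cmod_scale, Rabs_born_coef. rewrite repeat_length.
  eapply Rle_trans. apply Rmult_le_compat_l. apply pow_le; lra.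
  simpl repeat. apply chain_step. apply Rmult_le_pos. apply G0max_nonneg. apply pow_le.
  apply Rmult_le_pos. apply Gq_max_nonneg. apply eta_norm_nonneg.
  intros w Hw; apply chain_repeat_bound; auto.
  fold eta_norm. 
  apply Rle_trans with (alpha0 ^ S k * (Gq_maxR * eta_norm * (G0max * (Gq_max * eta_norm) ^ k))).
  - apply Rmult_le_compat_l. apply pow_le; lra. apply Rmult_le_compat_r.
    apply Rmult_le_pos. apply G0max_nonneg. apply pow_le. apply Rmult_le_pos. apply Gq_max_nonneg. apply eta_norm_nonneg.
    apply Rmult_le_compat_r. apply eta_norm_nonneg.
    apply (Rmaxl_ge Rc (fun r => lpnorm (conj_exp p) V (G0 r))); auto.
  - right. unfold series_gain, mu. rewrite !Rpow_mult_distr. simpl. ring.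
Qed.

Lemma supV_born_term k : supV (born_term eta (S k)) <= term_gain * mu ^ k * eta_norm ^ (S k).
Proof.
  apply supV_le. apply Rmult3_nonneg; [apply term_gain_nonneg | apply pow_le, mu_nonneg | apply pow_le, eta_norm_nonneg].
  intros v Hv. unfold born_term, KinvK. eapply Rle_trans. apply Kinv1_bound; auto. unfold term_gain.
  rewrite !Rmult_assoc. apply Rmult_le_compat_l. apply Kinv1_gain_nonneg. rewrite <- !Rmult_assoc.
  apply supRS_le. apply Rmult3_nonneg; [apply series_gain_nonneg | apply pow_le, mu_nonneg | apply pow_le, eta_norm_nonneg].
  intros; apply Kf_repeat_bound; auto.
Qed.
End Eta.

Lemma supV_prod_born_terms eta is : Forall (fun i => (1 <= i)%nat) is ->
  supV_prod (map (born_term eta) is) <= term_gain ^ length is * mu ^ (list_sum is - length is) * eta_norm eta ^ list_sum is.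
Proof.
  induction 1 as [|i is Hi Hf IH]; simpl. lra.
  destruct i as [|k]. lia.
  pose proof (length_le_list_sum is Hf).
  replace (S k + list_sum is - S (length is))%nat with (k + (list_sum is - length is))%nat by lia.
  rewrite !pow_add.
  eapply Rle_trans. apply Rmult_le_compat. apply supV_nonneg. apply supV_prod_nonneg. apply supV_born_term. apply IH.
  right. simpl. ring.
Qed.

Lemma supV_prod_map_le_pow (fb : bool -> T -> Cplx) Y xs : (forall b, supV (fb b) <= Y) ->
  supV_prod (map fb xs) <= Y ^ length xs.
Proof.
  intros HY. assert (0 <= Y) by (eapply Rle_trans; [apply supV_nonneg|apply (HY true)]).
  induction xs; simpl. lra. apply Rmult_le_compat; auto. apply supV_nonneg. apply supV_prod_nonneg.
Qed.

Lemma supV_prod_map_false (fb : bool -> T -> Cplx) Y xs : In false xs -> (forall b, supV (fb b) <= Y) ->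
  supV_prod (map fb xs) <= supV (fb false) * Y ^ pred (length xs).
Proof.
  intros Hin HY. assert (0 <= Y) by (eapply Rle_trans; [apply supV_nonneg|apply (HY true)]).
  induction xs as [|b xs IH]; simpl in *. destruct Hin.
  destruct b.
  - destruct Hin as [Hin|Hin]. discriminate.
    destruct xs as [|c xs]. destruct Hin. simpl length in *. simpl pred in *. simpl pow.
    eapply Rle_trans. apply Rmult_le_compat. apply supV_nonneg. apply supV_prod_nonneg. apply (HY true). apply IH; auto.
    right; ring.
  - apply Rmult_le_compat_l. apply supV_nonneg. apply supV_prod_map_le_pow; auto.
Qed.

Section Final.
Variable N : nat.
Hypothesis HN : (1 <= N)%nat.
Variable a : R.
Hypothesis Ha1 : a < 1.

Definition tail_gain := Kinv1_gain * (2 * (series_gain / (1 - a))).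
Definition split_gain := INR N * term_gain + tail_gain.
Definition high_const (is : list nat) :=
  Jinv_const (length is) (length is) * (term_gain ^ length is * mu ^ (S N - length is)).
Definition tail_mix_const (j : nat) :=
  Jinv_const (S j) (S j) * (tail_gain * split_gain ^ j * mu ^ (N - j)).
Definition main_const :=
  Rsum (index_tuples N) high_const +
  Rsum (seq 0 N) (fun j => Rsum (tuples [true; false] (S j)) (fun _ => tail_mix_const j)).

Lemma tail_gain_nonneg : 0 <= tail_gain.
Proof.
  unfold tail_gain. apply Rmult_le_pos. apply Kinv1_gain_nonneg. apply Rmult_le_pos. lra.
  apply Rdiv_le_0_compat. apply series_gain_nonneg. lra.
Qed.
Lemma split_gain_nonneg : 0 <= split_gain.
Proof. unfold split_gain. pose proof (pos_INR N). pose proof term_gain_nonneg. pose proof tail_gain_nonneg. nra. Qed.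
Lemma high_const_nonneg is : 0 <= high_const is.
Proof.
  unfold high_const. apply Rmult_le_pos. apply Jinv_const_nonneg.
  apply Rmult_le_pos; apply pow_le. apply term_gain_nonneg. apply mu_nonneg.
Qed.
Lemma tail_mix_const_nonneg j : 0 <= tail_mix_const j.
Proof.
  unfold tail_mix_const. apply Rmult_le_pos. apply Jinv_const_nonneg.
  apply Rmult3_nonneg. apply tail_gain_nonneg. apply pow_le, split_gain_nonneg. apply pow_le, mu_nonneg.
Qed.
Lemma main_const_nonneg : 0 <= main_const.
Proof.
  unfold main_const. apply Rplus_le_le_0_compat. apply Rsum_nonneg; intros; apply high_const_nonneg.
  apply Rsum_nonneg; intros; apply Rsum_nonneg; intros; apply tail_mix_const_nonneg.
Qed.

Section Data.
Variable eta : T -> Cplx.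
Variable phi : T -> T -> Cplx.
Hypothesis Hsmall : mu * eta_norm eta < a.
Hypothesis Hseries : forall r s, In r Rc -> In s Sc ->
  Cseries_to (fun n => Kfwd V alpha0 G0 (repeat eta (S n)) r s) (phi r s).

Definition born_tail (r s : T) : Cplx :=
  Csub (phi r s) (Csum (seq 0 N) (fun n => Kf (repeat eta (S n)) r s)).
Definition head_psi : T -> Cplx := fsum (seq 1 N) (born_term eta).
Definition tail_psi : T -> Cplx := Kinv1 born_tail.
(* [split_psi] indexes the two pieces of [Kinv1 phi] by a boolean, so that
   expanding [Jinv] multilinearly runs over tuples in {true, false}^j. *)
Definition split_psi (b : bool) : T -> Cplx := if b then head_psi else tail_psi.

Lemma born_tail_bound r s : In r Rc -> In s Sc ->
  Cmod (born_tail r s) <= 2 * (series_gain * mu ^ N * eta_norm eta ^ S N / (1 - a)).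
Proof.
  intros Hr Hs. destruct (Hseries r s Hr Hs) as [Hre Him].
  pose proof (eta_norm_nonneg eta). pose proof mu_nonneg. pose proof series_gain_nonneg.
  eapply Rle_trans. apply Cmod_re_im.
  assert (Bre : Rabs (re (born_tail r s)) <= series_gain * mu ^ N * eta_norm eta ^ S N / (1 - a)).
  { unfold born_tail, Csub, Cadd, Copp. cbn [re]. rewrite re_Csum.
    apply (series_tail_geom _ _ _ _ N (fun n => re (Kf (repeat eta (S n)) r s))); auto.
    intros n. eapply Rle_trans. apply Rabs_re_le. apply Kf_repeat_bound; auto. }
  assert (Bim : Rabs (im (born_tail r s)) <= series_gain * mu ^ N * eta_norm eta ^ S N / (1 - a)).
  { unfold born_tail, Csub, Cadd, Copp. cbn [im]. rewrite im_Csum.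
    apply (series_tail_geom _ _ _ _ N (fun n => im (Kf (repeat eta (S n)) r s))); auto.
    intros n. eapply Rle_trans. apply Rabs_im_le. apply Kf_repeat_bound; auto. }
  lra.
Qed.

Lemma supV_tail_psi : supV tail_psi <= tail_gain * mu ^ N * eta_norm eta ^ S N.
Proof.
  pose proof (eta_norm_nonneg eta). pose proof mu_nonneg.
  apply supV_le. apply Rmult3_nonneg; [apply tail_gain_nonneg | apply pow_le; auto | apply pow_le; auto].
  intros w Hw. eapply Rle_trans. apply Kinv1_bound; auto.
  replace (tail_gain * mu ^ N * eta_norm eta ^ S N)
    with (Kinv1_gain * (2 * (series_gain * mu ^ N * eta_norm eta ^ S N / (1 - a)))) by (unfold tail_gain; field; lra).
  apply Rmult_le_compat_l. apply Kinv1_gain_nonneg. apply supRS_le; [|apply born_tail_bound].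
  apply Rmult_le_pos. lra. apply Rdiv_le_0_compat; [|lra].
  apply Rmult3_nonneg. apply series_gain_nonneg. apply pow_le; auto. apply pow_le; auto.
Qed.

Lemma supV_head_psi : supV head_psi <= INR N * term_gain * eta_norm eta.
Proof.
  pose proof (eta_norm_nonneg eta) as Hh. pose proof mu_nonneg. pose proof term_gain_nonneg.
  apply supV_le. apply Rmult3_nonneg; auto. apply pos_INR.
  intros w Hw. unfold head_psi, fsum. eapply Rle_trans. apply Cmod_Csum.
  eapply Rle_trans. apply (Rsum_le _ _ (fun _ => term_gain * eta_norm eta)).
  - intros i Hi. apply in_seq in Hi. destruct i as [|k]. lia.
    eapply Rle_trans. apply supV_ge; auto. eapply Rle_trans. apply supV_born_term.
    replace (term_gain * mu ^ k * eta_norm eta ^ S k)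
      with (term_gain * eta_norm eta * (mu * eta_norm eta) ^ k) by (rewrite Rpow_mult_distr; simpl; ring).
    rewrite <- (Rmult_1_r (term_gain * eta_norm eta)) at 2.
    apply Rmult_le_compat_l. apply Rmult_le_pos; auto.
    apply pow_le_one. split; [apply Rmult_le_pos|]; auto; lra.
  - rewrite Rsum_const, length_seq. right; ring.
Qed.

Lemma supV_split_psi b : supV (split_psi b) <= split_gain * eta_norm eta.
Proof.
  pose proof (eta_norm_nonneg eta) as Hh. pose proof mu_nonneg. pose proof term_gain_nonneg.
  pose proof tail_gain_nonneg. pose proof (pos_INR N).
  assert (0 <= INR N * term_gain * eta_norm eta) by (apply Rmult3_nonneg; auto).
  destruct b; simpl; unfold split_gain.
  - eapply Rle_trans. apply supV_head_psi. nra.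
  - eapply Rle_trans. apply supV_tail_psi.
    replace (tail_gain * mu ^ N * eta_norm eta ^ S N)
      with (tail_gain * eta_norm eta * (mu * eta_norm eta) ^ N) by (rewrite Rpow_mult_distr; simpl; ring).
    apply Rle_trans with (tail_gain * eta_norm eta); [|nra].
    rewrite <- (Rmult_1_r (tail_gain * eta_norm eta)) at 2.
    apply Rmult_le_compat_l. nra. apply pow_le_one. split; [apply Rmult_le_pos|]; auto; lra.
Qed.

Lemma Kinv1_phi_split : eqV (Kinv1 phi) (fsum [true; false] split_psi).
Proof.
  intros w Hw.
  replace phi with (fun r s => Cadd (Csum (seq 0 N) (fun n => Kf (repeat eta (S n)) r s)) (born_tail r s)) at 1.
  2: { apply functional_extensionality; intro r; apply functional_extensionality; intro s.
       unfold born_tail, Csub. cring. }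
  rewrite Hadd by auto. unfold fsum, split_psi, tail_psi; simpl.
  rewrite (Kinv1_lin_sum (seq 0 N) (fun n => Kf (repeat eta (S n)))) by auto.
  unfold head_psi, fsum. rewrite <- seq_shift, Csum_map. unfold born_term, KinvK. cring.
Qed.

Lemma Kinv_repeat_phi j w : In w V ->
  Kinv V alpha0 G0 Kinv1 (repeat phi (S j)) w =
  Cadd (Csum (tuples (seq 1 N) (S j)) (fun is => comp_term eta is w))
       (Csum (tl (tuples [true; false] (S j))) (fun xs => Jinv (S j) (map split_psi xs) w)).
Proof.
  intros Hw. unfold Kinv. rewrite repeat_length, Kinv_aux_Jinv, map_repeat by auto.
  rewrite (Jinv_congr (S j) _ _ (Forall2_repeat eqV _ _ _ Kinv1_phi_split)) by auto.
  pose proof (Jinv_expand (S j) [true; false] split_psi (S j) [] w Hw) as Hexp.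
  rewrite app_nil_l in Hexp. rewrite Hexp.
  destruct (tuples_bool_head (S j)) as [E _]. rewrite E, Csum_cons. f_equal.
  rewrite app_nil_l, map_repeat. simpl split_psi.
  pose proof (Jinv_expand (S j) (seq 1 N) (born_term eta) (S j) [] w Hw) as Hexp'.
  rewrite app_nil_l in Hexp'. unfold head_psi. rewrite Hexp'.
  apply Csum_ext. intros xs Hxs. apply tuples_spec in Hxs as [Hl _].
  unfold comp_term. rewrite Hl. reflexivity.
Qed.

Lemma high_terms_bound w : In w V ->
  Cmod (Csum (filter (fun is => negb (list_sum is <=? N)) (index_tuples N)) (fun is => comp_term eta is w))
  <= Rsum (index_tuples N) high_const * eta_norm eta ^ S N.
Proof.
  intros Hw. pose proof (eta_norm_nonneg eta). pose proof mu_nonneg.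
  eapply Rle_trans. apply (Cmod_Csum_bound _ _ high_const).
  2: { apply Rmult_le_compat_r. apply pow_le; auto. apply Rsum_filter_le. intros; apply high_const_nonneg. }
  intros is His. apply filter_In in His as [HU Hs].
  apply Bool.negb_true_iff, Nat.leb_gt in Hs.
  apply in_flat_map in HU as [j [Hj Ht]].
  apply in_seq in Hj. apply tuples_spec in Ht as [Hl Hf].
  assert (Hp1 : Forall (fun i => (1 <= i)%nat) is).
  { eapply Forall_impl; [|apply Hf]. intros i Hi. apply in_seq in Hi. lia. }
  unfold comp_term. eapply Rle_trans. apply Jinv_bound; auto. rewrite length_map.
  unfold high_const. rewrite !Rmult_assoc. apply Rmult_le_compat_l. apply Jinv_const_nonneg.
  eapply Rle_trans. apply supV_prod_born_terms; auto.
  rewrite !Rmult_assoc. apply Rmult_le_compat_l. apply pow_le, term_gain_nonneg.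
  apply pow_trade_up; auto; [lra|lia].
Qed.

Lemma tail_mix_term_bound j xs w : (j < N)%nat -> In w V -> In xs (tl (tuples [true; false] (S j))) ->
  Cmod (Jinv (S j) (map split_psi xs) w) <= tail_mix_const j * eta_norm eta ^ S N.
Proof.
  intros Hj Hw Hxs. pose proof (eta_norm_nonneg eta) as Hh. pose proof mu_nonneg as Hmu.
  destruct (tuples_bool_head (S j)) as [E Hfalse].
  assert (Hl : length xs = S j).
  { assert (Hin : In xs (tuples [true; false] (S j))) by (rewrite E; right; auto).
    apply tuples_spec in Hin. tauto. }
  eapply Rle_trans. apply Jinv_bound; auto. rewrite length_map, Hl.
  unfold tail_mix_const. rewrite Rmult_assoc. apply Rmult_le_compat_l. apply Jinv_const_nonneg.
  eapply Rle_trans. apply (supV_prod_map_false split_psi (split_gain * eta_norm eta)); auto.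
  { apply supV_split_psi. }
  rewrite Hl. simpl pred. simpl split_psi.
  eapply Rle_trans. apply Rmult_le_compat_r.
  { apply pow_le. apply Rmult_le_pos; auto. apply split_gain_nonneg. }
  apply supV_tail_psi.
  pose proof (pow_trade_down mu (eta_norm eta) j N Hmu Hh ltac:(lra) ltac:(lia)).
  rewrite Rpow_mult_distr.
  replace (tail_gain * mu ^ N * eta_norm eta ^ S N * (split_gain ^ j * eta_norm eta ^ j)) with
    (tail_gain * split_gain ^ j * eta_norm eta ^ S N * (mu ^ N * eta_norm eta ^ j)) by ring.
  replace (tail_gain * split_gain ^ j * mu ^ (N - j) * eta_norm eta ^ S N) with
    (tail_gain * split_gain ^ j * eta_norm eta ^ S N * mu ^ (N - j)) by ring.
  apply Rmult_le_compat_l; auto.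
  apply Rmult3_nonneg. apply tail_gain_nonneg. apply pow_le, split_gain_nonneg. apply pow_le; auto.
Qed.

Lemma tail_mix_terms_bound w : In w V ->
  Cmod (Csum (seq 0 N) (fun j => Csum (tl (tuples [true; false] (S j))) (fun xs => Jinv (S j) (map split_psi xs) w)))
  <= Rsum (seq 0 N) (fun j => Rsum (tuples [true; false] (S j)) (fun _ => tail_mix_const j)) * eta_norm eta ^ S N.
Proof.
  intros Hw. apply Cmod_Csum_bound. intros j Hj. apply in_seq in Hj.
  eapply Rle_trans. apply (Cmod_Csum_bound _ _ (fun _ => tail_mix_const j)).
  { intros xs Hxs. apply tail_mix_term_bound; auto; lia. }
  apply Rmult_le_compat_r. apply pow_le, eta_norm_nonneg.
  destruct (tuples_bool_head (S j)) as [E _]. rewrite E at 2. simpl.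
  pose proof (tail_mix_const_nonneg j). lra.
Qed.

Lemma main_bound w : In w V ->
  Cmod (Csub (eta w) (Csum (seq 0 N) (fun j => Kinv V alpha0 G0 Kinv1 (repeat phi (S j)) w)))
  <= main_const * eta_norm eta ^ S N.
Proof.
  intros Hw.
  rewrite (Csum_ext (seq 0 N) _ _ (fun j _ => Kinv_repeat_phi j w Hw)), Csum_add.
  replace (Csum (seq 0 N) (fun j => Csum (tuples (seq 1 N) (S j)) (fun is => comp_term eta is w)))
    with (Csum (index_tuples N) (fun is => comp_term eta is w))
    by (unfold index_tuples; rewrite Csum_flat_map; reflexivity).
  rewrite (Csum_filter (index_tuples N) (fun is => list_sum is <=? N)),
    (Csum_perm _ _ _ (index_tuples_small_perm N)), (comp_terms_total eta N HN w Hw).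
  set (high := Csum (filter _ (index_tuples N)) _).
  set (mixed := Csum (seq 0 N) _).
  replace (Csub (eta w) (Cadd (Cadd (eta w) high) mixed)) with (Copp (Cadd high mixed)) by (unfold Csub; cring).
  rewrite Cmod_opp. eapply Rle_trans. apply Cmod_add.
  unfold main_const. rewrite Rmult_plus_distr_r.
  apply Rplus_le_compat; [apply high_terms_bound | apply tail_mix_terms_bound]; auto.
Qed.

End Data.
End Final.
End Main.

Theorem mainTheorem8
  (T : Type) (V dV Rc Sc : list T)
  (HV : NoDup V) (HdV : NoDup dV) (HR : NoDup Rc) (HS : NoDup Sc)
  (Hdisj : forall x, In x V -> ~ In x dV)
  (HRsub : incl Rc dV) (HSsub : incl Sc dV)
  (HRne : Rc <> []) (HSne : Sc <> [])
  (alpha0 : R) (Halpha0 : 0 < alpha0) (G0 : T -> T -> Cplx)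
  (p : pexp) (Hp : valid_pexp p)
  (Kinv1 : (T -> T -> Cplx) -> (T -> Cplx))
  (Hinj : forall eta eta' : T -> Cplx,
      (forall r s, In r Rc -> In s Sc -> Kfwd V alpha0 G0 [eta] r s = Kfwd V alpha0 G0 [eta'] r s) ->
      forall v, In v V -> eta v = eta' v)
  (Hwd : forall phi psi : T -> T -> Cplx,
      (forall r s, In r Rc -> In s Sc -> phi r s = psi r s) ->
      forall v, In v V -> Kinv1 phi v = Kinv1 psi v)
  (Hadd : forall (phi psi : T -> T -> Cplx) v, In v V ->
      Kinv1 (fun r s => Cadd (phi r s) (psi r s)) v = Cadd (Kinv1 phi v) (Kinv1 psi v))
  (Hscal : forall (c : Cplx) (phi : T -> T -> Cplx) v, In v V ->
      Kinv1 (fun r s => Cmul c (phi r s)) v = Cmul c (Kinv1 phi v))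
  (Hleft : forall (eta : T -> Cplx) v, In v V ->
      Kinv1 (Kfwd V alpha0 G0 [eta]) v = eta v)
  (N : nat) (HN : (1 <= N)%nat) (a : R) (Ha0 : 0 < a) (Ha1 : a < 1) :
  let mu := alpha0 * Rmaxl V (fun v => lpnorm (conj_exp p) V (G0 v)) in
  exists CNa : R,
    forall (eta : T -> Cplx),
      mu * lpnorm p V eta < a ->
      forall phi : T -> T -> Cplx,
        (forall r s, In r Rc -> In s Sc ->
           Cseries_to (fun n => Kfwd V alpha0 G0 (repeat eta (S n)) r s) (phi r s)) ->
        lpnorm p V
          (fun v => Csub (eta v)
             (Csum (seq 0 N) (fun j => Kinv V alpha0 G0 Kinv1 (repeat phi (S j)) v)))
        <= CNa * lpnorm p V eta ^ (S N).
Proof.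
  intros mu. pose proof (main_const_nonneg T V Rc Sc alpha0 G0 Kinv1 Halpha0 p N a Ha1) as HC.
  exists ((INR (length V) + 1) * main_const T V Rc Sc alpha0 G0 Kinv1 p N a).
  intros eta Hsmall phi Hseries.
  eapply Rle_trans.
  - apply lpnorm_le_sup; [exact Hp | | intros v Hv; eapply main_bound; eauto].
    apply Rmult_le_pos; [exact HC | apply pow_le, lpnorm_nonneg].
  - unfold eta_norm. right. ring.
Qed.
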